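(* Let $C$ be a formula in canonical form and let $M$ be a closed $\lambda\mu$-term (no free $\lambda$-variables and no free $\mu$-variables; free first-order variables are allowed) with $\vdash M:C\mid$ derivable. Then there exists a term $N$ in canonical normal form of type $C$ (in the empty contexts) such that $M=N$ in the equational theory $\beta\eta\mu\rho\theta$.
   Context: First-order language, terms and formulas: fix countably many function and relation symbols with arities and countably many first-order variables; terms $t ::= x \mid f\,t_1\dots t_k$; formulas $A ::= \top \mid \bot \mid X\,t_1\dots t_k \mid A\rightarrow A \mid A\wedge A \mid \forall x A$, up to renaming of bound variables. Atomic formulas are $\top$, $\bot$ and $X\vec t$. $\lambda\mu$-terms: $M ::= a \mid \lambda a.M \mid (M)M \mid \langle M,M\rangle \mid \pi_1 M \mid \pi_2 M \mid \star \mid [\alpha]M \mid \mu\alpha.M \mid \Lambda x.M \mid M\{t\}$ ($a$ $\lambda$-variables, $\alpha$ $\mu$-variables), up to $\alpha$-equivalence; $(M)N_1\dots N_k$ abbreviates left-nested applications, and similarly $b\{t_1\}\dots\{t_q\}$. Typing $\Gamma\vdash M:A\mid\Delta$: variable rule $\Gamma,a:A\vdash a:A\mid\Delta$; $\lambda$-abstraction/application for $\rightarrow$; $\star:\top$; pairing/projections for $\wedge$; from $\Gamma\vdash M:A\mid\Delta,\alpha:A$ infer $[\alpha]M:\bot$ (same contexts); from $\Gamma\vdash M:\bot\mid\Delta,\alpha:A$ infer $\Gamma\vdash\mu\alpha.M:A\mid\Delta$; from $\Gamma\vdash M:A\mid\Delta$, $x$ not free in $\Gamma,\Delta$, infer $\Lambda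 x.M:\forall xA$; from $M:\forall xA$ infer $M\{t\}:A[t/x]$. $\beta\eta\mu\rho\theta$ is the congruence on typed terms generated by $(\lambda a.M)N=M[N/a]$; $\lambda a.(M)a=M$ ($a\notin M$); $\pi_1\langle M,N\rangle=M$; $\pi_2\langle M,N\rangle=N$; $\langle\pi_1M,\pi_2M\rangle=M$; $\star=M$ for $M:\top$; $(\Lambda x.M)\{t\}=M[t/x]$; $\Lambda x.M\{x\}=M$ ($x$ not free in $M$); $(\mu\alpha.M)N=\mu\alpha.M[[\alpha](L)N/[\alpha]L]$; $\pi_i(\mu\alpha.M)=\mu\alpha.M[[\alpha]\pi_iL/[\alpha]L]$; $(\mu\alpha.M)\{t\}=\mu\alpha.M[[\alpha]L\{t\}/[\alpha]L]$; $[\beta]\mu\alpha.M=M[\beta/\alpha]$; $\mu\alpha.[\alpha]M=M$ ($\alpha\notin M$); $[\alpha]M=M$ when $M:\bot$; where $M[\mathcal C[L]/[\alpha]L]$ replaces each subterm $[\alpha]L$ by $\mathcal C[L]$. Canonical forms of formulas: grammar $\mathsf{R} ::= X\vec t \mid \bot$; $\mathsf{A} ::= \mathsf{R} \mid \mathsf{Q}\rightarrow\mathsf{A}$; $\mathsf{Q} ::= \mathsf{A} \mid \forall x\,\mathsf{Q}$; $\mathsf{B} ::= \mathsf{Q} \mid \mathsf{B}\wedge\mathsf{Q}$; $\mathsf{C} ::= \mathsf{B} \mid \top$. Formulas from $\mathsf{Q}$ are $\rightarrow$-canonical: $\forall x_1\dots\forall x_p(A_1\rightarrow\cdots\rightarrow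 A_n\rightarrow R)$ with $R\in\{\bot\}\cup\{X\vec t\}$ and each $A_i$ $\rightarrow$-canonical. Formulas from $\mathsf{C}$ are $\top$ or $(\dots(Q_1\wedge Q_2)\wedge\dots)\wedge Q_n$ ($n\ge1$) with $Q_i$ $\rightarrow$-canonical. Canonical normal forms (defined relative to contexts $\Gamma$ whose declared types are $\rightarrow$-canonical and $\Delta$): a canonical normal form of $\rightarrow$-canonical type $\forall x_1\dots\forall x_p(A_1\rightarrow\cdots\rightarrow A_n\rightarrow R)$ is a term $\Lambda x_1\dots\Lambda x_p.\lambda a_1\dots\lambda a_n.\mu\alpha[\beta](b\{t_1\}\dots\{t_q\})M_1\dots M_k$ where $a_i:A_i$ are fresh; $b$ is declared in $\Gamma$ or is one of the $a_i$, with type $\forall y_1\dots\forall y_q(B_1\rightarrow\cdots\rightarrow B_k\rightarrow S)$ ($S$ atomic); $t_1,\dots,t_q$ are first-order terms; each $M_j$ is a canonical normal form of type $B_j[\vec t/\vec y]$; $\alpha$ is a fresh $\mu$-variable of type $R$ and $\beta$ is a $\mu$-variable declared in $\Delta$ or equal to $\alpha$, of type $S[\vec t/\vec y]$; with the convention that ''$[\beta]$'' is omitted exactly when $S=\bot$ and ''$\mu\alpha$'' is omitted exactly when $R=\bot$. A canonical normal form of type $\top$ is $\star$; of type $(\dots(Q_1\wedge Q_2)\dots)\wedge Q_n$ ($n\ge1$) it is $\langle\dots\langle N_1,N_2\rangle\dots,N_n\rangle$ (just $N_1$ if $n=1$) with $N_i$ canonical normal forms of type $Q_i$. *)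

(* Syntax of first-order logic and of the lambda-mu calculus
   with de Bruijn indices for all three kinds of variables (first-order
   variables, lambda-variables, mu-variables); this realises "up to renaming of
   bound variables / alpha-equivalence".  The signature is given by two arity
   functions: function symbol f : nat has arity fa f, relation symbol X : nat
   has arity ra X. *)
From Stdlib Require Import List Arith.
Import ListNotations.

Definition scons {X : Type} (x : X) (f : nat -> X) (n : nat) : X :=
  match n with 0 => x | S n => f n end.

Definition upren (xi : nat -> nat) : nat -> nat := scons 0 (fun n => S (xi n)).

Inductive fterm : Type :=
| FVar : nat -> fterm
| FApp : nat -> list fterm -> fterm.

Fixpoint fren (xi : nat -> nat) (t : fterm) : fterm :=
  match t with
  | FVar n => FVar (xi n)
  | FApp f ts => FApp f (map (fren xi) ts)
  end.

Fixpoint fsub (sg : nat -> fterm) (t : fterm) : fterm :=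
  match t with
  | FVar n => sg n
  | FApp f ts => FApp f (map (fsub sg) ts)
  end.

Definition fup (sg : nat -> fterm) : nat -> fterm :=
  scons (FVar 0) (fun n => fren S (sg n)).

Fixpoint wf_fterm (fa : nat -> nat) (t : fterm) : Prop :=
  match t with
  | FVar _ => True
  | FApp f ts =>
      length ts = fa f /\
      (fix go (l : list fterm) : Prop :=
         match l with nil => True | u :: l' => wf_fterm fa u /\ go l' end) ts
  end.

Inductive formula : Type :=
| Top : formula
| Bot : formula
| Atom : nat -> list fterm -> formula
| Imp : formula -> formula -> formula
| And : formula -> formula -> formula
| All : formula -> formula.

Fixpoint Fren (xi : nat -> nat) (A : formula) : formula :=
  match A with
  | Top => Top
  | Bot => Bot
  | Atom X ts => Atom X (map (fren xi) ts)
  | Imp A B => Imp (Fren xi A) (Fren xi B)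
  | And A B => And (Fren xi A) (Fren xi B)
  | All A => All (Fren (upren xi) A)
  end.

Fixpoint Fsub (sg : nat -> fterm) (A : formula) : formula :=
  match A with
  | Top => Top
  | Bot => Bot
  | Atom X ts => Atom X (map (fsub sg) ts)
  | Imp A B => Imp (Fsub sg A) (Fsub sg B)
  | And A B => And (Fsub sg A) (Fsub sg B)
  | All A => All (Fsub (fup sg) A)
  end.

(* shift of free first-order variables (used for "x not free in Gamma, Delta") *)
Definition shiftF (A : formula) : formula := Fren S A.
(* A[t/x] where x is the variable bound by the outer quantifier *)
Definition inst0 (t : fterm) (A : formula) : formula := Fsub (scons t FVar) A.

Fixpoint wf_form (fa ra : nat -> nat) (A : formula) : Prop :=
  match A with
  | Top | Bot => True
  | Atom X ts => length ts = ra X /\ Forall (wf_fterm fa) ts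
  | Imp A B | And A B => wf_form fa ra A /\ wf_form fa ra B
  | All A => wf_form fa ra A
  end.

Definition atomic (A : formula) : Prop :=
  match A with Top | Bot | Atom _ _ => True | _ => False end.

Definition isR (A : formula) : Prop :=
  match A with Bot | Atom _ _ => True | _ => False end.

Inductive canA : formula -> Prop :=
| canA_R : forall R, isR R -> canA R
| canA_imp : forall Q A, canQ Q -> canA A -> canA (Imp Q A)
with canQ : formula -> Prop :=
| canQ_A : forall A, canA A -> canQ A
| canQ_all : forall Q, canQ Q -> canQ (All Q).

Inductive canB : formula -> Prop :=
| canB_Q : forall Q, canQ Q -> canB Q
| canB_and : forall B Q, canB B -> canQ Q -> canB (And B Q).

Definition canC (C : formula) : Prop := canB C \/ C = Top.

Inductive term : Type :=
| Var : nat -> term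
| Lam : term -> term
| App : term -> term -> term
| Pair : term -> term -> term
| Pi1 : term -> term
| Pi2 : term -> term
| Star : term
| Named : nat -> term -> term     (* [alpha]M *)
| Mu : term -> term               (* binds mu index 0 *)
| FLam : term -> term             (* Lambda x. M, binds first-order index 0 *)
| Inst : term -> fterm -> term.

Fixpoint tren_fo (xi : nat -> nat) (M : term) : term :=
  match M with
  | Var n => Var n
  | Lam M => Lam (tren_fo xi M)
  | App M N => App (tren_fo xi M) (tren_fo xi N)
  | Pair M N => Pair (tren_fo xi M) (tren_fo xi N)
  | Pi1 M => Pi1 (tren_fo xi M)
  | Pi2 M => Pi2 (tren_fo xi M)
  | Star => Star
  | Named a M => Named a (tren_fo xi M)
  | Mu M => Mu (tren_fo xi M)
  | FLam M => FLam (tren_fo (upren xi) M)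
  | Inst M t => Inst (tren_fo xi M) (fren xi t)
  end.

Fixpoint tsub_fo (sg : nat -> fterm) (M : term) : term :=
  match M with
  | Var n => Var n
  | Lam M => Lam (tsub_fo sg M)
  | App M N => App (tsub_fo sg M) (tsub_fo sg N)
  | Pair M N => Pair (tsub_fo sg M) (tsub_fo sg N)
  | Pi1 M => Pi1 (tsub_fo sg M)
  | Pi2 M => Pi2 (tsub_fo sg M)
  | Star => Star
  | Named a M => Named a (tsub_fo sg M)
  | Mu M => Mu (tsub_fo sg M)
  | FLam M => FLam (tsub_fo (fup sg) M)
  | Inst M t => Inst (tsub_fo sg M) (fsub sg t)
  end.

Fixpoint tren_lam (xi : nat -> nat) (M : term) : term :=
  match M with
  | Var n => Var (xi n)
  | Lam M => Lam (tren_lam (upren xi) M)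
  | App M N => App (tren_lam xi M) (tren_lam xi N)
  | Pair M N => Pair (tren_lam xi M) (tren_lam xi N)
  | Pi1 M => Pi1 (tren_lam xi M)
  | Pi2 M => Pi2 (tren_lam xi M)
  | Star => Star
  | Named a M => Named a (tren_lam xi M)
  | Mu M => Mu (tren_lam xi M)
  | FLam M => FLam (tren_lam xi M)
  | Inst M t => Inst (tren_lam xi M) t
  end.

Fixpoint tren_mu (xi : nat -> nat) (M : term) : term :=
  match M with
  | Var n => Var n
  | Lam M => Lam (tren_mu xi M)
  | App M N => App (tren_mu xi M) (tren_mu xi N)
  | Pair M N => Pair (tren_mu xi M) (tren_mu xi N)
  | Pi1 M => Pi1 (tren_mu xi M)
  | Pi2 M => Pi2 (tren_mu xi M)
  | Star => Star
  | Named a M => Named (xi a) (tren_mu xi M)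
  | Mu M => Mu (tren_mu (upren xi) M)
  | FLam M => FLam (tren_mu xi M)
  | Inst M t => Inst (tren_mu xi M) t
  end.

Fixpoint tsub_lam (sg : nat -> term) (M : term) : term :=
  match M with
  | Var n => sg n
  | Lam M => Lam (tsub_lam (scons (Var 0) (fun n => tren_lam S (sg n))) M)
  | App M N => App (tsub_lam sg M) (tsub_lam sg N)
  | Pair M N => Pair (tsub_lam sg M) (tsub_lam sg N)
  | Pi1 M => Pi1 (tsub_lam sg M)
  | Pi2 M => Pi2 (tsub_lam sg M)
  | Star => Star
  | Named a M => Named a (tsub_lam sg M)
  | Mu M => Mu (tsub_lam (fun n => tren_mu S (sg n)) M)
  | FLam M => FLam (tsub_lam (fun n => tren_fo S (sg n)) M)
  | Inst M t => Inst (tsub_lam sg M) t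
  end.

(* structural substitutions M[[alpha](L)N/[alpha]L], M[[alpha]pi_i L/[alpha]L],
   M[[alpha]L{t}/[alpha]L]; k is the current de Bruijn index of alpha. *)
Fixpoint ssub_app (k : nat) (N : term) (M : term) : term :=
  match M with
  | Var n => Var n
  | Lam M => Lam (ssub_app k (tren_lam S N) M)
  | App M1 M2 => App (ssub_app k N M1) (ssub_app k N M2)
  | Pair M1 M2 => Pair (ssub_app k N M1) (ssub_app k N M2)
  | Pi1 M => Pi1 (ssub_app k N M)
  | Pi2 M => Pi2 (ssub_app k N M)
  | Star => Star
  | Named a L =>
      if Nat.eqb a k then Named a (App (ssub_app k N L) N)
      else Named a (ssub_app k N L)
  | Mu M => Mu (ssub_app (S k) (tren_mu S N) M)
  | FLam M => FLam (ssub_app k (tren_fo S N) M)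
  | Inst M t => Inst (ssub_app k N M) t
  end.

Fixpoint ssub_proj (i : bool) (k : nat) (M : term) : term :=
  match M with
  | Var n => Var n
  | Lam M => Lam (ssub_proj i k M)
  | App M1 M2 => App (ssub_proj i k M1) (ssub_proj i k M2)
  | Pair M1 M2 => Pair (ssub_proj i k M1) (ssub_proj i k M2)
  | Pi1 M => Pi1 (ssub_proj i k M)
  | Pi2 M => Pi2 (ssub_proj i k M)
  | Star => Star
  | Named a L =>
      if Nat.eqb a k then
        Named a (if i then Pi1 (ssub_proj i k L) else Pi2 (ssub_proj i k L))
      else Named a (ssub_proj i k L)
  | Mu M => Mu (ssub_proj i (S k) M)
  | FLam M => FLam (ssub_proj i k M)
  | Inst M t => Inst (ssub_proj i k M) t
  end.

Fixpoint ssub_inst (k : nat) (t : fterm) (M : term) : term :=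
  match M with
  | Var n => Var n
  | Lam M => Lam (ssub_inst k t M)
  | App M1 M2 => App (ssub_inst k t M1) (ssub_inst k t M2)
  | Pair M1 M2 => Pair (ssub_inst k t M1) (ssub_inst k t M2)
  | Pi1 M => Pi1 (ssub_inst k t M)
  | Pi2 M => Pi2 (ssub_inst k t M)
  | Star => Star
  | Named a L =>
      if Nat.eqb a k then Named a (Inst (ssub_inst k t L) t)
      else Named a (ssub_inst k t L)
  | Mu M => Mu (ssub_inst (S k) t M)
  | FLam M => FLam (ssub_inst k (fren S t) M)
  | Inst M u => Inst (ssub_inst k t M) u
  end.

(* ---------- typing  Gamma |- M : A | Delta ----------
   Gamma : types of lambda-variables (index n = n-th entry),
   Delta : types of mu-variables.  Formulas introduced in a derivation
   must be formulas of the language (well-formed w.r.t. the arities). *)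
Inductive typ (fa ra : nat -> nat) :
  list formula -> list formula -> term -> formula -> Prop :=
| ty_var : forall G D n A, nth_error G n = Some A -> typ fa ra G D (Var n) A
| ty_lam : forall G D M A B, wf_form fa ra A -> typ fa ra (A :: G) D M B ->
    typ fa ra G D (Lam M) (Imp A B)
| ty_app : forall G D M N A B, typ fa ra G D M (Imp A B) -> typ fa ra G D N A ->
    typ fa ra G D (App M N) B
| ty_star : forall G D, typ fa ra G D Star Top
| ty_pair : forall G D M N A B, typ fa ra G D M A -> typ fa ra G D N B ->
    typ fa ra G D (Pair M N) (And A B)
| ty_pi1 : forall G D M A B, typ fa ra G D M (And A B) -> typ fa ra G D (Pi1 M) A
| ty_pi2 : forall G D M A B, typ fa ra G D M (And A B) -> typ fa ra G D (Pi2 M) B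
| ty_named : forall G D a M A, nth_error D a = Some A -> typ fa ra G D M A ->
    typ fa ra G D (Named a M) Bot
| ty_mu : forall G D M A, wf_form fa ra A -> typ fa ra G (A :: D) M Bot ->
    typ fa ra G D (Mu M) A
| ty_flam : forall G D M A, typ fa ra (map shiftF G) (map shiftF D) M A ->
    typ fa ra G D (FLam M) (All A)
| ty_inst : forall G D M A t, wf_fterm fa t -> typ fa ra G D M (All A) ->
    typ fa ra G D (Inst M t) (inst0 t A).

(* ---------- the typed congruence beta eta mu rho theta ----------
   eqt fa ra G D M N A  :  G |- M = N : A | D *)
Inductive eqt (fa ra : nat -> nat) :
  list formula -> list formula -> term -> term -> formula -> Prop :=
| eq_refl : forall G D M A, typ fa ra G D M A -> eqt fa ra G D M M A
| eq_sym : forall G D M N A, eqt fa ra G D M N A -> eqt fa ra G D N M A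
| eq_trans : forall G D M N P A, eqt fa ra G D M N A -> eqt fa ra G D N P A ->
    eqt fa ra G D M P A
| eq_lam : forall G D M M' A B, wf_form fa ra A -> eqt fa ra (A :: G) D M M' B ->
    eqt fa ra G D (Lam M) (Lam M') (Imp A B)
| eq_app : forall G D M M' N N' A B, eqt fa ra G D M M' (Imp A B) ->
    eqt fa ra G D N N' A -> eqt fa ra G D (App M N) (App M' N') B
| eq_pair : forall G D M M' N N' A B, eqt fa ra G D M M' A -> eqt fa ra G D N N' B ->
    eqt fa ra G D (Pair M N) (Pair M' N') (And A B)
| eq_pi1 : forall G D M M' A B, eqt fa ra G D M M' (And A B) ->
    eqt fa ra G D (Pi1 M) (Pi1 M') A
| eq_pi2 : forall G D M M' A B, eqt fa ra G D M M' (And A B) ->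
    eqt fa ra G D (Pi2 M) (Pi2 M') B
| eq_named : forall G D a M M' A, nth_error D a = Some A -> eqt fa ra G D M M' A ->
    eqt fa ra G D (Named a M) (Named a M') Bot
| eq_mu : forall G D M M' A, wf_form fa ra A -> eqt fa ra G (A :: D) M M' Bot ->
    eqt fa ra G D (Mu M) (Mu M') A
| eq_flam : forall G D M M' A, eqt fa ra (map shiftF G) (map shiftF D) M M' A ->
    eqt fa ra G D (FLam M) (FLam M') (All A)
| eq_inst : forall G D M M' A t, wf_fterm fa t -> eqt fa ra G D M M' (All A) ->
    eqt fa ra G D (Inst M t) (Inst M' t) (inst0 t A)
| ax_beta : forall G D M N B, typ fa ra G D (App (Lam M) N) B ->
    eqt fa ra G D (App (Lam M) N) (tsub_lam (scons N Var) M) B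
| ax_eta : forall G D M A B, typ fa ra G D M (Imp A B) ->
    eqt fa ra G D (Lam (App (tren_lam S M) (Var 0))) M (Imp A B)
| ax_pi1 : forall G D M N A, typ fa ra G D (Pi1 (Pair M N)) A ->
    eqt fa ra G D (Pi1 (Pair M N)) M A
| ax_pi2 : forall G D M N A, typ fa ra G D (Pi2 (Pair M N)) A ->
    eqt fa ra G D (Pi2 (Pair M N)) N A
| ax_surj : forall G D M A B, typ fa ra G D M (And A B) ->
    eqt fa ra G D (Pair (Pi1 M) (Pi2 M)) M (And A B)
| ax_top : forall G D M, typ fa ra G D M Top -> eqt fa ra G D Star M Top
| ax_theta : forall G D M t A, typ fa ra G D (Inst (FLam M) t) A ->
    eqt fa ra G D (Inst (FLam M) t) (tsub_fo (scons t FVar) M) A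
| ax_eta_all : forall G D M A, typ fa ra G D M (All A) ->
    eqt fa ra G D (FLam (Inst (tren_fo S M) (FVar 0))) M (All A)
| ax_mu_app : forall G D M N B, typ fa ra G D (App (Mu M) N) B ->
    eqt fa ra G D (App (Mu M) N) (Mu (ssub_app 0 (tren_mu S N) M)) B
| ax_mu_pi1 : forall G D M A, typ fa ra G D (Pi1 (Mu M)) A ->
    eqt fa ra G D (Pi1 (Mu M)) (Mu (ssub_proj true 0 M)) A
| ax_mu_pi2 : forall G D M A, typ fa ra G D (Pi2 (Mu M)) A ->
    eqt fa ra G D (Pi2 (Mu M)) (Mu (ssub_proj false 0 M)) A
| ax_mu_inst : forall G D M t A, typ fa ra G D (Inst (Mu M) t) A ->
    eqt fa ra G D (Inst (Mu M) t) (Mu (ssub_inst 0 t M)) A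
| ax_rho : forall G D b M, typ fa ra G D (Named b (Mu M)) Bot ->
    eqt fa ra G D (Named b (Mu M)) (tren_mu (scons b (fun n => n)) M) Bot
| ax_eta_mu : forall G D M A, typ fa ra G D M A ->
    eqt fa ra G D (Mu (Named 0 (tren_mu S M))) M A
| ax_bot : forall G D a M, nth_error D a = Some Bot -> typ fa ra G D M Bot ->
    eqt fa ra G D (Named a M) M Bot.

(* the closing part "mu alpha [beta]" of the body of a canonical normal form:
   [beta] is omitted exactly when S = bot; Dl is the mu-context in scope. *)
Definition head_close (Dl : list formula) (P : term) (S : formula) (M : term) : Prop :=
  (S = Bot /\ M = P) \/
  (S <> Bot /\ exists beta, nth_error Dl beta = Some S /\ M = Named beta P).

(* cnfQ fa G D M Q : M is a canonical normal form of the ->-canonical type Q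
   relative to G, D.
   spine fa G D h T P S : P = (h{t1}...{tq}) M1 ... Mk where h : T with
   T = forall y1..yq (B1 -> ... -> Bk -> S0), each Mj is a canonical normal
   form of type Bj[t/y], and S = S0[t/y] is atomic. *)
Inductive cnfQ (fa : nat -> nat) :
  list formula -> list formula -> term -> formula -> Prop :=
| cnf_all : forall G D M Q, cnfQ fa (map shiftF G) (map shiftF D) M Q ->
    cnfQ fa G D (FLam M) (All Q)
| cnf_imp : forall G D M A B, cnfQ fa (A :: G) D M B ->
    cnfQ fa G D (Lam M) (Imp A B)
| cnf_bot : forall G D b T P S M, nth_error G b = Some T ->
    spine fa G D (Var b) T P S -> head_close D P S M ->
    cnfQ fa G D M Bot
| cnf_atom : forall G D X ts b T P S M, nth_error G b = Some T ->
    spine fa G (Atom X ts :: D) (Var b) T P S -> head_close (Atom X ts :: D) P S M ->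
    cnfQ fa G D (Mu M) (Atom X ts)
with spine (fa : nat -> nat) :
  list formula -> list formula -> term -> formula -> term -> formula -> Prop :=
| sp_end : forall G D h S, atomic S -> spine fa G D h S h S
| sp_inst : forall G D h T t P S, wf_fterm fa t ->
    spine fa G D (Inst h t) (inst0 t T) P S -> spine fa G D h (All T) P S
| sp_app : forall G D h B T N P S, cnfQ fa G D N B ->
    spine fa G D (App h N) T P S -> spine fa G D h (Imp B T) P S.

Inductive cnfB (fa : nat -> nat) (G D : list formula) : term -> formula -> Prop :=
| cnfB_one : forall M Q, cnfQ fa G D M Q -> cnfB fa G D M Q
| cnfB_and : forall M N B Q, cnfB fa G D M B -> cnfQ fa G D N Q ->
    cnfB fa G D (Pair M N) (And B Q).

Definition cnfC (fa : nat -> nat) (G D : list formula) (M : term) (C : formula) : Prop :=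
  (C = Top /\ M = Star) \/ cnfB fa G D M C.

From Stdlib Require Import List Arith Lia FunctionalExtensionality.
Import ListNotations.

(* Normalization by reducibility in continuation-passing form.  A stack (an evaluation
   context ending either in [Bot] or in a [mu]-variable of atomic type) is good for [A]
   when its arguments are good terms; a term is good for [A] when, in every renaming of
   its contexts, plugging it into a good stack gives a command equal to a canonical normal
   form of type [Bot].  Goodness is preserved by every typing rule under simultaneous
   substitutions that send [lambda]-variables to good terms and [mu]-variables to good
   stacks; the latter turn the structural substitutions of the [mu]-rules into ordinary
   substitutions.  For canonical formulas, good terms equal canonical normal forms, and
   variables are good; both are proved together by induction on the formula, using the
   eta-laws.  A closed typed term is good by the identity substitution. *)

(** * Substitution in first-order terms and formulas *)

Definition idn : nat -> nat := fun n => n.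

Section FtermNestedInd.
Variable P : fterm -> Prop.
Hypothesis HVar : forall n, P (FVar n).
Hypothesis HApp : forall f ts, Forall P ts -> P (FApp f ts).

Fixpoint fterm_nested_ind (t : fterm) : P t :=
  match t with
  | FVar n => HVar n
  | FApp f ts => HApp f ts
      ((fix go (l : list fterm) : Forall P l :=
         match l with
         | nil => Forall_nil _
         | u :: l' => Forall_cons _ (fterm_nested_ind u) (go l')
         end) ts)
  end.
End FtermNestedInd.

Lemma map_Forall_ext {X Y} (f g : X -> Y) l :
  Forall (fun x => f x = g x) l -> map f l = map g l.
Proof. induction 1; simpl; f_equal; auto. Qed.

Lemma fren_fsub xi t : fren xi t = fsub (fun n => FVar (xi n)) t.
Proof.
  induction t using fterm_nested_ind; simpl; auto. f_equal. now apply map_Forall_ext.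
Qed.

Lemma fsub_fsub s1 s2 t : fsub s2 (fsub s1 t) = fsub (fun n => fsub s2 (s1 n)) t.
Proof.
  induction t using fterm_nested_ind; simpl; auto.
  rewrite map_map. f_equal. now apply map_Forall_ext.
Qed.

Lemma fsub_id t : fsub FVar t = t.
Proof.
  induction t using fterm_nested_ind; simpl; auto.
  f_equal. rewrite <- (map_id ts) at 2. now apply map_Forall_ext.
Qed.

Lemma fren_id t : fren idn t = t.
Proof. rewrite fren_fsub. apply fsub_id. Qed.

Lemma wf_FApp fa f ts :
  wf_fterm fa (FApp f ts) <-> length ts = fa f /\ Forall (wf_fterm fa) ts.
Proof.
  simpl. split; intros [Hlen Hts]; split; auto; clear Hlen.
  - induction ts; simpl in *; constructor; tauto.
  - induction Hts; simpl; tauto.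
Qed.

Lemma wf_fsub fa s t :
  (forall n, wf_fterm fa (s n)) -> wf_fterm fa t -> wf_fterm fa (fsub s t).
Proof.
  intros Hs. induction t using fterm_nested_ind; [intros; apply Hs|].
  simpl fsub. rewrite !wf_FApp, length_map. intros [Hlen Hts]. split; auto.
  apply Forall_map. clear Hlen. induction H; inversion Hts; subst; constructor; auto.
Qed.

Lemma wf_fren fa xi t : wf_fterm fa t -> wf_fterm fa (fren xi t).
Proof. rewrite fren_fsub. apply wf_fsub. simpl; auto. Qed.

Definition fcomp (s1 s2 : nat -> fterm) : nat -> fterm := fun n => fsub s2 (s1 n).

Lemma fup_ren xi : fup (fun n => FVar (xi n)) = (fun n => FVar (upren xi n)).
Proof. apply functional_extensionality; intros [|n]; reflexivity. Qed.

Lemma fup_id : fup FVar = FVar.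
Proof. apply functional_extensionality; intros [|n]; reflexivity. Qed.

Lemma upren_idn : upren idn = idn.
Proof. apply functional_extensionality; intros [|n]; reflexivity. Qed.

Lemma upren_comp (x y : nat -> nat) :
  (fun n => upren y (upren x n)) = upren (fun n => y (x n)).
Proof. apply functional_extensionality; intros [|n]; reflexivity. Qed.

Lemma fup_comp s1 s2 : fcomp (fup s1) (fup s2) = fup (fcomp s1 s2).
Proof.
  apply functional_extensionality; intros [|n]; unfold fcomp; simpl; auto.
  rewrite !fren_fsub, !fsub_fsub. f_equal. apply functional_extensionality; intros m.
  simpl. now rewrite fren_fsub.
Qed.

Lemma Fren_Fsub xi A : Fren xi A = Fsub (fun n => FVar (xi n)) A.
Proof.
  revert xi; induction A; intros xi; simpl; f_equal; auto.
  - apply map_ext, fren_fsub.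
  - now rewrite IHA, fup_ren.
Qed.

Lemma Fsub_Fsub s1 s2 A : Fsub s2 (Fsub s1 A) = Fsub (fcomp s1 s2) A.
Proof.
  revert s1 s2; induction A; intros s1 s2; simpl; f_equal; auto.
  - rewrite map_map. apply map_ext, fsub_fsub.
  - now rewrite IHA, fup_comp.
Qed.

Lemma Fsub_id A : Fsub FVar A = A.
Proof.
  induction A; simpl; f_equal; auto.
  - rewrite <- (map_id l) at 2. apply map_ext, fsub_id.
  - now rewrite fup_id.
Qed.

Lemma Fren_Fren x1 x2 A : Fren x2 (Fren x1 A) = Fren (fun n => x2 (x1 n)) A.
Proof. now rewrite !Fren_Fsub, Fsub_Fsub. Qed.

Lemma Fren_id A : Fren idn A = A.
Proof. rewrite Fren_Fsub. apply Fsub_id. Qed.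

Lemma Fren_Fsub_comp xf sf B : Fren xf (Fsub sf B) = Fsub (fcomp sf (fun n => FVar (xf n))) B.
Proof. now rewrite Fren_Fsub, Fsub_Fsub. Qed.

Lemma Fsub_shiftF sf B : Fsub (fup sf) (shiftF B) = shiftF (Fsub sf B).
Proof.
  unfold shiftF. rewrite !Fren_Fsub, !Fsub_Fsub. f_equal.
  apply functional_extensionality; intros n; unfold fcomp; simpl. now rewrite fren_fsub.
Qed.

Lemma wf_Fsub fa ra s A :
  (forall n, wf_fterm fa (s n)) -> wf_form fa ra A -> wf_form fa ra (Fsub s A).
Proof.
  revert s; induction A; intros s Hs; simpl; intuition.
  - now rewrite length_map.
  - apply Forall_map. eapply Forall_impl; [|eauto]. intros; now apply wf_fsub.
  - apply IHA; auto. intros [|n]; simpl; auto. now apply wf_fren.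
Qed.

Lemma wf_Fren fa ra xi A : wf_form fa ra A -> wf_form fa ra (Fren xi A).
Proof. rewrite Fren_Fsub. apply wf_Fsub. simpl; auto. Qed.

Lemma wf_inst0 fa ra t A : wf_fterm fa t -> wf_form fa ra A -> wf_form fa ra (inst0 t A).
Proof. intros Ht. apply wf_Fsub. intros [|n]; simpl; auto. Qed.

Lemma Fsub_inst0 s t A : Fsub s (inst0 t A) = inst0 (fsub s t) (Fsub (fup s) A).
Proof.
  unfold inst0. rewrite !Fsub_Fsub. f_equal.
  apply functional_extensionality; intros [|n]; unfold fcomp; simpl; auto.
  now rewrite fren_fsub, fsub_fsub, fsub_id.
Qed.

Lemma Fren_inst0 xi t A : Fren xi (inst0 t A) = inst0 (fren xi t) (Fren (upren xi) A).
Proof. now rewrite !Fren_Fsub, Fsub_inst0, fup_ren, fren_fsub. Qed.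

Lemma inst0_var0_Fren_upren_S A : inst0 (FVar 0) (Fren (upren S) A) = A.
Proof.
  unfold inst0. rewrite Fren_Fsub, Fsub_Fsub. rewrite <- (Fsub_id A) at 2. f_equal.
  apply functional_extensionality; intros [|n]; reflexivity.
Qed.

Fixpoint fsize (A : formula) : nat :=
  match A with
  | Top | Bot | Atom _ _ => 1
  | Imp A B | And A B => S (fsize A + fsize B)
  | All A => S (fsize A)
  end.

Lemma fsize_Fsub s A : fsize (Fsub s A) = fsize A.
Proof. revert s; induction A; intros; simpl; auto. Qed.

Lemma fsize_Fren xi A : fsize (Fren xi A) = fsize A.
Proof. rewrite Fren_Fsub. apply fsize_Fsub. Qed.

Lemma fsize_inst0 t A : fsize (inst0 t A) = fsize A.
Proof. apply fsize_Fsub. Qed.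

Lemma fsize_gt0 A : 0 < fsize A.
Proof. destruct A; simpl; lia. Qed.

(** * Simultaneous renaming and substitution in terms *)

Fixpoint ren (xf xl xm : nat -> nat) (M : term) : term :=
  match M with
  | Var n => Var (xl n)
  | Lam M => Lam (ren xf (upren xl) xm M)
  | App M N => App (ren xf xl xm M) (ren xf xl xm N)
  | Pair M N => Pair (ren xf xl xm M) (ren xf xl xm N)
  | Pi1 M => Pi1 (ren xf xl xm M)
  | Pi2 M => Pi2 (ren xf xl xm M)
  | Star => Star
  | Named a M => Named (xm a) (ren xf xl xm M)
  | Mu M => Mu (ren xf xl (upren xm) M)
  | FLam M => FLam (ren (upren xf) xl xm M)
  | Inst M t => Inst (ren xf xl xm M) (fren xf t)
  end.

(* [mu]-variables are substituted by stacks, which makes the structural substitutions of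
   the [mu]-rules instances of [subst] below; a stack ending in [None] is the context of a
   command of type [Bot]. *)
Inductive frame := FrApp (N : term) | FrPi1 | FrPi2 | FrInst (t : fterm).
Definition stack := (list frame * option nat)%type.

Definition apply_frame (f : frame) (L : term) : term :=
  match f with
  | FrApp N => App L N
  | FrPi1 => Pi1 L
  | FrPi2 => Pi2 L
  | FrInst t => Inst L t
  end.

Definition plug_frames (F : list frame) (L : term) : term :=
  fold_left (fun L f => apply_frame f L) F L.

Definition plug (E : stack) (L : term) : term :=
  match snd E with
  | None => plug_frames (fst E) L
  | Some b => Named b (plug_frames (fst E) L)
  end.

Definition ren_frame xf xl xm (f : frame) : frame :=
  match f with
  | FrApp N => FrApp (ren xf xl xm N)
  | FrInst t => FrInst (fren xf t)
  | f => f
  end.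

Definition ren_stack xf xl xm (E : stack) : stack :=
  (map (ren_frame xf xl xm) (fst E), option_map xm (snd E)).

Definition id_stack : nat -> stack := fun a => ([], Some a).

Definition up_lam_tm (sl : nat -> term) := scons (Var 0) (fun n => ren idn S idn (sl n)).
Definition up_lam_stk (sm : nat -> stack) := fun a => ren_stack idn S idn (sm a).
Definition up_mu_tm (sl : nat -> term) := fun n => ren idn idn S (sl n).
Definition up_mu_stk (sm : nat -> stack) :=
  scons ([], Some 0) (fun a => ren_stack idn idn S (sm a)).
Definition up_fo_tm (sl : nat -> term) := fun n => ren S idn idn (sl n).
Definition up_fo_stk (sm : nat -> stack) := fun a => ren_stack S idn idn (sm a).

Fixpoint subst (sf : nat -> fterm) (sl : nat -> term) (sm : nat -> stack) (M : term) : term :=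
  match M with
  | Var n => sl n
  | Lam M => Lam (subst sf (up_lam_tm sl) (up_lam_stk sm) M)
  | App M N => App (subst sf sl sm M) (subst sf sl sm N)
  | Pair M N => Pair (subst sf sl sm M) (subst sf sl sm N)
  | Pi1 M => Pi1 (subst sf sl sm M)
  | Pi2 M => Pi2 (subst sf sl sm M)
  | Star => Star
  | Named a M => plug (sm a) (subst sf sl sm M)
  | Mu M => Mu (subst sf (up_mu_tm sl) (up_mu_stk sm) M)
  | FLam M => FLam (subst (fup sf) (up_fo_tm sl) (up_fo_stk sm) M)
  | Inst M t => Inst (subst sf sl sm M) (fsub sf t)
  end.

Definition subst_frame sf sl sm (f : frame) : frame :=
  match f with
  | FrApp N => FrApp (subst sf sl sm N)
  | FrInst t => FrInst (fsub sf t)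
  | f => f
  end.

Definition subst_stack sf sl sm (E : stack) : stack :=
  match snd E with
  | None => (map (subst_frame sf sl sm) (fst E), None)
  | Some b => (map (subst_frame sf sl sm) (fst E) ++ fst (sm b), snd (sm b))
  end.

Ltac funext_cases := apply functional_extensionality; intros [|?]; reflexivity.

Lemma plug_frames_app F1 F2 L : plug_frames (F1 ++ F2) L = plug_frames F2 (plug_frames F1 L).
Proof. apply fold_left_app. Qed.

Lemma plug_cons f F e L : plug (f :: F, e) L = plug (F, e) (apply_frame f L).
Proof. destruct e; reflexivity. Qed.

Lemma ren_plug_frames xf xl xm F L :
  ren xf xl xm (plug_frames F L) = plug_frames (map (ren_frame xf xl xm) F) (ren xf xl xm L).
Proof.
  revert L; induction F as [|f F IH]; intros L; simpl; auto. rewrite IH. now destruct f.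
Qed.

Lemma ren_plug xf xl xm E L :
  ren xf xl xm (plug E L) = plug (ren_stack xf xl xm E) (ren xf xl xm L).
Proof. destruct E as [F [b|]]; unfold plug; simpl; now rewrite ren_plug_frames. Qed.

Lemma subst_plug_frames sf sl sm F L :
  subst sf sl sm (plug_frames F L) =
  plug_frames (map (subst_frame sf sl sm) F) (subst sf sl sm L).
Proof.
  revert L; induction F as [|f F IH]; intros L; simpl; auto. rewrite IH. now destruct f.
Qed.

Lemma subst_plug sf sl sm E L :
  subst sf sl sm (plug E L) = plug (subst_stack sf sl sm E) (subst sf sl sm L).
Proof.
  destruct E as [F [b|]]; unfold plug, subst_stack; simpl; rewrite subst_plug_frames; auto.
  now rewrite plug_frames_app.
Qed.

Lemma ren_ren xf xl xm yf yl ym M :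
  ren yf yl ym (ren xf xl xm M) =
  ren (fun n => yf (xf n)) (fun n => yl (xl n)) (fun n => ym (xm n)) M.
Proof.
  revert xf xl xm yf yl ym; induction M; intros; simpl; f_equal; auto;
    try (rewrite IHM; f_equal; apply upren_comp).
  now rewrite !fren_fsub, fsub_fsub.
Qed.

Lemma ren_stack_ren_stack xf xl xm yf yl ym E :
  ren_stack yf yl ym (ren_stack xf xl xm E) =
  ren_stack (fun n => yf (xf n)) (fun n => yl (xl n)) (fun n => ym (xm n)) E.
Proof.
  destruct E as [F e]; unfold ren_stack; simpl. f_equal.
  - rewrite map_map. apply map_ext. intros []; simpl; auto.
    + now rewrite ren_ren.
    + now rewrite !fren_fsub, fsub_fsub.
  - now destruct e.
Qed.

Lemma ren_as_subst xf xl xm M :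
  ren xf xl xm M =
  subst (fun n => FVar (xf n)) (fun n => Var (xl n)) (fun a => id_stack (xm a)) M.
Proof.
  revert xf xl xm; induction M; intros; simpl; rewrite ?IHM, ?IHM1, ?IHM2; auto;
    try (f_equal; f_equal; funext_cases).
  f_equal. apply fren_fsub.
Qed.

Lemma ren_stack_as_subst xf xl xm E :
  ren_stack xf xl xm E =
  subst_stack (fun n => FVar (xf n)) (fun n => Var (xl n)) (fun a => id_stack (xm a)) E.
Proof.
  destruct E as [F [b|]]; unfold subst_stack, ren_stack; simpl; rewrite ?app_nil_r; f_equal;
    apply map_ext; intros []; simpl; auto; now rewrite ?ren_as_subst, ?fren_fsub.
Qed.

Lemma subst_ren sf sl sm xf xl xm M :
  subst sf sl sm (ren xf xl xm M) =
  subst (fun n => sf (xf n)) (fun n => sl (xl n)) (fun n => sm (xm n)) M.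
Proof.
  revert sf sl sm xf xl xm; induction M; intros; simpl; f_equal; auto;
    try (rewrite IHM; f_equal; funext_cases).
  now rewrite fren_fsub, fsub_fsub.
Qed.

Lemma subst_stack_ren_stack sf sl sm xf xl xm E :
  subst_stack sf sl sm (ren_stack xf xl xm E) =
  subst_stack (fun n => sf (xf n)) (fun n => sl (xl n)) (fun n => sm (xm n)) E.
Proof.
  assert (HF : forall F, map (subst_frame sf sl sm) (map (ren_frame xf xl xm) F) =
    map (subst_frame (fun n => sf (xf n)) (fun n => sl (xl n)) (fun n => sm (xm n))) F).
  { intros F. rewrite map_map. apply map_ext. intros []; simpl; auto.
    - now rewrite subst_ren.
    - now rewrite fren_fsub, fsub_fsub. }
  destruct E as [F [b|]]; unfold subst_stack, ren_stack; simpl; now rewrite HF.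
Qed.

Lemma ren_subst sf sl sm xf xl xm M :
  ren xf xl xm (subst sf sl sm M) =
  subst (fcomp sf (fun n => FVar (xf n))) (fun n => ren xf xl xm (sl n))
        (fun a => ren_stack xf xl xm (sm a)) M.
Proof.
  revert sf sl sm xf xl xm; induction M; intros; simpl;
    rewrite ?ren_plug, ?IHM, ?IHM1, ?IHM2; auto.
  - f_equal. f_equal; apply functional_extensionality; intros [|n];
      unfold up_lam_tm, up_lam_stk; simpl; now rewrite ?ren_ren, ?ren_stack_ren_stack.
  - f_equal. f_equal; apply functional_extensionality; intros [|n];
      unfold up_mu_tm, up_mu_stk; simpl; now rewrite ?ren_ren, ?ren_stack_ren_stack.
  - f_equal. f_equal.
    + now rewrite <- fup_ren, fup_comp.
    + apply functional_extensionality; intros n; unfold up_fo_tm; now rewrite !ren_ren.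
    + apply functional_extensionality; intros n; unfold up_fo_stk.
      now rewrite !ren_stack_ren_stack.
  - now rewrite fren_fsub, fsub_fsub.
Qed.

Lemma ren_stack_subst_stack sf sl sm xf xl xm E :
  ren_stack xf xl xm (subst_stack sf sl sm E) =
  subst_stack (fcomp sf (fun n => FVar (xf n))) (fun n => ren xf xl xm (sl n))
        (fun a => ren_stack xf xl xm (sm a)) E.
Proof.
  assert (HF : forall F, map (ren_frame xf xl xm) (map (subst_frame sf sl sm) F) =
     map (subst_frame (fcomp sf (fun n => FVar (xf n))) (fun n => ren xf xl xm (sl n))
        (fun a => ren_stack xf xl xm (sm a))) F).
  { intros F. rewrite map_map. apply map_ext. intros []; simpl; auto.
    - now rewrite ren_subst.
    - now rewrite fren_fsub, fsub_fsub. }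
  destruct E as [F [b|]]; unfold subst_stack, ren_stack; simpl; now rewrite ?map_app, HF.
Qed.

Lemma fcomp_FVar_r s : fcomp s FVar = s.
Proof. apply functional_extensionality; intros n; apply fsub_id. Qed.

Lemma subst_subst sf sl sm tf tl tm M :
  subst tf tl tm (subst sf sl sm M) =
  subst (fcomp sf tf) (fun n => subst tf tl tm (sl n))
        (fun a => subst_stack tf tl tm (sm a)) M.
Proof.
  revert sf sl sm tf tl tm; induction M; intros; simpl;
    rewrite ?subst_plug, ?IHM, ?IHM1, ?IHM2, ?fsub_fsub; auto.
  - f_equal. f_equal; apply functional_extensionality; intros [|n];
      unfold up_lam_tm, up_lam_stk; simpl;
      rewrite ?subst_ren, ?ren_subst, ?subst_stack_ren_stack, ?ren_stack_subst_stack,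
        ?fcomp_FVar_r; auto.
  - f_equal. f_equal; apply functional_extensionality; intros [|n];
      unfold up_mu_tm, up_mu_stk; simpl;
      rewrite ?subst_ren, ?ren_subst, ?subst_stack_ren_stack, ?ren_stack_subst_stack,
        ?fcomp_FVar_r; auto.
  - f_equal. f_equal.
    + apply fup_comp.
    + apply functional_extensionality; intros n; unfold up_fo_tm.
      rewrite subst_ren, ren_subst. f_equal.
      apply functional_extensionality; intros; unfold fcomp; simpl; now rewrite fren_fsub.
    + apply functional_extensionality; intros n; unfold up_fo_stk.
      rewrite subst_stack_ren_stack, ren_stack_subst_stack. f_equal.
      apply functional_extensionality; intros; unfold fcomp; simpl; now rewrite fren_fsub.
Qed.

Lemma ren_id M : ren idn idn idn M = M.
Proof. induction M; simpl; rewrite ?upren_idn, ?IHM, ?IHM1, ?IHM2, ?fren_id; auto. Qed.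

Lemma subst_id M : subst FVar Var id_stack M = M.
Proof. rewrite <- (ren_id M) at 2. now rewrite ren_as_subst. Qed.

Lemma tren_lam_ren xi M : tren_lam xi M = ren idn xi idn M.
Proof.
  revert xi; induction M; intros; simpl; rewrite ?upren_idn, ?IHM, ?IHM1, ?IHM2, ?fren_id; auto.
Qed.

Lemma tren_mu_ren xi M : tren_mu xi M = ren idn idn xi M.
Proof.
  revert xi; induction M; intros; simpl; rewrite ?upren_idn, ?IHM, ?IHM1, ?IHM2, ?fren_id; auto.
Qed.

Lemma tren_fo_ren xi M : tren_fo xi M = ren xi idn idn M.
Proof.
  revert xi; induction M; intros; simpl; rewrite ?upren_idn, ?IHM, ?IHM1, ?IHM2, ?fren_id; auto.
Qed.

Lemma tsub_lam_subst sg M : tsub_lam sg M = subst FVar sg id_stack M.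
Proof.
  revert sg; induction M; intros; simpl; rewrite ?IHM, ?IHM1, ?IHM2, ?fsub_id, ?fup_id; auto;
    f_equal; f_equal; apply functional_extensionality; intros [|n]; simpl; auto;
    unfold up_lam_tm, up_mu_tm, up_fo_tm;
    now rewrite ?tren_lam_ren, ?tren_mu_ren, ?tren_fo_ren.
Qed.

Lemma tsub_fo_subst sg M : tsub_fo sg M = subst sg Var id_stack M.
Proof.
  revert sg; induction M; intros; simpl; rewrite ?IHM, ?IHM1, ?IHM2; auto;
    f_equal; f_equal; funext_cases.
Qed.

Definition frame_stack (k : nat) (f : frame) : nat -> stack :=
  fun a => if Nat.eqb a k then ([f], Some a) else id_stack a.

Lemma up_mu_stk_frame_stack k f :
  up_mu_stk (frame_stack k f) = frame_stack (S k) (ren_frame idn idn S f).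
Proof.
  apply functional_extensionality; intros [|a]; [reflexivity|].
  unfold up_mu_stk, frame_stack; simpl. now destruct (a =? k).
Qed.

Lemma frame_stack_ren xf xl f k :
  (fun a => ren_stack xf xl idn (frame_stack k f a)) = frame_stack k (ren_frame xf xl idn f).
Proof.
  apply functional_extensionality; intros a. unfold frame_stack. now destruct (a =? k).
Qed.

Ltac ssub_cases :=
  simpl; rewrite ?fsub_id, ?fup_id;
  first
  [ reflexivity
  | unfold frame_stack; match goal with |- context [Nat.eqb ?a ?b] => now destruct (Nat.eqb a b) end
  | f_equal; f_equal; try funext_cases;
    unfold up_lam_stk, up_fo_stk; rewrite ?up_mu_stk_frame_stack, ?frame_stack_ren; simpl;
    now rewrite ?tren_lam_ren, ?tren_mu_ren, ?tren_fo_ren, ?fren_id ].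

Lemma ssub_app_subst k N M : ssub_app k N M = subst FVar Var (frame_stack k (FrApp N)) M.
Proof. revert k N; induction M; intros; simpl; rewrite ?IHM, ?IHM1, ?IHM2; ssub_cases. Qed.

Lemma ssub_proj_subst (i : bool) k M :
  ssub_proj i k M = subst FVar Var (frame_stack k (if i then FrPi1 else FrPi2)) M.
Proof.
  revert k; induction M; intros; simpl; rewrite ?IHM, ?IHM1, ?IHM2; destruct i; ssub_cases.
Qed.

Lemma ssub_inst_subst k t M : ssub_inst k t M = subst FVar Var (frame_stack k (FrInst t)) M.
Proof. revert k t; induction M; intros; simpl; rewrite ?IHM, ?IHM1, ?IHM2; ssub_cases. Qed.

(** * Typing of stacks and substitutions *)

Section Typing.
Variables fa ra : nat -> nat.

Fixpoint typ_frames (G D : list formula) (A : formula) (F : list frame) (B : formula) : Prop :=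
  match F with
  | [] => A = B
  | FrApp N :: F => exists A1 A2, A = Imp A1 A2 /\ typ fa ra G D N A1 /\ typ_frames G D A2 F B
  | FrPi1 :: F => exists A1 A2, A = And A1 A2 /\ typ_frames G D A1 F B
  | FrPi2 :: F => exists A1 A2, A = And A1 A2 /\ typ_frames G D A2 F B
  | FrInst t :: F => exists A1, A = All A1 /\ wf_fterm fa t /\ typ_frames G D (inst0 t A1) F B
  end.

Definition typ_stack G D A (E : stack) : Prop :=
  exists B, typ_frames G D A (fst E) B /\
    match snd E with None => B = Bot | Some b => nth_error D b = Some B end.

Lemma typ_frames_cons G D A f F B : typ_frames G D A (f :: F) B ->
  exists A', typ_frames G D A [f] A' /\ typ_frames G D A' F B.
Proof.
  destruct f; simpl.
  - intros (A1 & A2 & -> & HN & HF). exists A2. split; auto. now exists A1, A2.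
  - intros (A1 & A2 & -> & HF). exists A1. split; auto. now exists A1, A2.
  - intros (A1 & A2 & -> & HF). exists A2. split; auto. now exists A1, A2.
  - intros (A1 & -> & Ht & HF). exists (inst0 t A1). split; auto. now exists A1.
Qed.

Lemma wf_typ_frame G D A f A' :
  typ_frames G D A [f] A' -> wf_form fa ra A -> wf_form fa ra A'.
Proof.
  destruct f; simpl.
  - intros (A1 & A2 & -> & _ & ->) Hw. apply Hw.
  - intros (A1 & A2 & -> & ->) Hw. apply Hw.
  - intros (A1 & A2 & -> & ->) Hw. apply Hw.
  - intros (A1 & -> & Ht & <-) Hw. now apply wf_inst0.
Qed.

Lemma typ_plug_frames G D F : forall L A B,
  typ fa ra G D L A -> typ_frames G D A F B -> typ fa ra G D (plug_frames F L) B.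
Proof.
  induction F as [|f F IH]; intros L A B HL HF; simpl in *; [now subst|].
  destruct f; simpl in HF.
  - destruct HF as (A1 & A2 & -> & HN & HF). eapply IH; [|eauto]. econstructor; eauto.
  - destruct HF as (A1 & A2 & -> & HF). eapply IH; [|eauto]. econstructor; eauto.
  - destruct HF as (A1 & A2 & -> & HF). eapply IH; [|eauto]. econstructor; eauto.
  - destruct HF as (A1 & -> & Ht & HF). eapply IH; [|eauto]. econstructor; eauto.
Qed.

Lemma typ_plug G D E L A :
  typ fa ra G D L A -> typ_stack G D A E -> typ fa ra G D (plug E L) Bot.
Proof.
  intros HL (B & HF & He). destruct E as [F [b|]]; unfold plug; simpl in *.
  - econstructor; eauto. eapply typ_plug_frames; eauto.
  - subst. eapply typ_plug_frames; eauto.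
Qed.

Definition ctx_ren (xf xi : nat -> nat) (G G' : list formula) :=
  forall n B, nth_error G n = Some B -> nth_error G' (xi n) = Some (Fren xf B).

Lemma ctx_ren_up xf xi G G' A :
  ctx_ren xf xi G G' -> ctx_ren xf (upren xi) (A :: G) (Fren xf A :: G').
Proof. intros H [|n] B Hn; simpl in *; [congruence|auto]. Qed.

Lemma ctx_ren_shiftF_up xf xi G G' :
  ctx_ren xf xi G G' -> ctx_ren (upren xf) xi (map shiftF G) (map shiftF G').
Proof.
  intros H n B Hn. rewrite nth_error_map in *.
  destruct (nth_error G n) eqn:E; simpl in Hn; inversion Hn; subst.
  rewrite (H _ _ E). simpl. f_equal. unfold shiftF. now rewrite !Fren_Fren.
Qed.

Lemma ctx_ren_id G : ctx_ren idn idn G G.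
Proof. intros n B H. now rewrite Fren_id. Qed.

Lemma ctx_ren_S G A : ctx_ren idn S G (A :: G).
Proof. intros n B H; simpl. now rewrite Fren_id. Qed.

Lemma ctx_ren_shiftF G : ctx_ren S idn G (map shiftF G).
Proof. intros n B H. unfold idn. now rewrite nth_error_map, H. Qed.

Lemma ctx_ren_comp xf xi yf yi G G' G'' :
  ctx_ren xf xi G G' -> ctx_ren yf yi G' G'' ->
  ctx_ren (fun n => yf (xf n)) (fun n => yi (xi n)) G G''.
Proof. intros H1 H2 n B Hn. rewrite <- Fren_Fren. now apply H2, H1. Qed.

Lemma typ_ren G D M A : typ fa ra G D M A -> forall xf xl xm G' D',
  ctx_ren xf xl G G' -> ctx_ren xf xm D D' ->
  typ fa ra G' D' (ren xf xl xm M) (Fren xf A).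
Proof.
  induction 1; intros xf xl xm G' D' HG HD; simpl.
  - now constructor; auto.
  - constructor; [now apply wf_Fren|]. apply IHtyp; auto. now apply ctx_ren_up.
  - econstructor; eauto.
  - constructor.
  - constructor; auto.
  - econstructor. now apply (IHtyp xf xl xm G' D').
  - econstructor. now apply (IHtyp xf xl xm G' D').
  - econstructor; eauto.
  - constructor; [now apply wf_Fren|]. apply IHtyp; auto. now apply ctx_ren_up.
  - constructor. apply IHtyp; now apply ctx_ren_shiftF_up.
  - rewrite Fren_inst0. econstructor; [now apply wf_fren|]. now apply (IHtyp xf xl xm G' D').
Qed.

Lemma typ_frames_ren G D F : forall A B xf xl xm G' D',
  ctx_ren xf xl G G' -> ctx_ren xf xm D D' -> typ_frames G D A F B ->
  typ_frames G' D' (Fren xf A) (map (ren_frame xf xl xm) F) (Fren xf B).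
Proof.
  induction F as [|f F IH]; intros A B xf xl xm G' D' HG HD HF; simpl in *; [now subst|].
  destruct f; simpl in *.
  - destruct HF as (A1 & A2 & -> & HN & HF). exists (Fren xf A1), (Fren xf A2).
    split; auto. split; [eapply typ_ren|eapply IH]; eauto.
  - destruct HF as (A1 & A2 & -> & HF). exists (Fren xf A1), (Fren xf A2). eauto.
  - destruct HF as (A1 & A2 & -> & HF). exists (Fren xf A1), (Fren xf A2). eauto.
  - destruct HF as (A1 & -> & Ht & HF). exists (Fren (upren xf) A1).
    split; auto. split; [now apply wf_fren|]. rewrite <- Fren_inst0. eapply IH; eauto.
Qed.

Lemma typ_stack_ren G D A E xf xl xm G' D' :
  ctx_ren xf xl G G' -> ctx_ren xf xm D D' -> typ_stack G D A E ->
  typ_stack G' D' (Fren xf A) (ren_stack xf xl xm E).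
Proof.
  intros HG HD (B & HF & He). exists (Fren xf B). split.
  - eapply typ_frames_ren; eauto.
  - destruct E as [F [b|]]; simpl in *; subst; auto.
Qed.

Definition subst_typed G D G' D' sf sl sm :=
  (forall n, wf_fterm fa (sf n)) /\
  (forall n B, nth_error G n = Some B -> typ fa ra G' D' (sl n) (Fsub sf B)) /\
  (forall a B, nth_error D a = Some B -> typ_stack G' D' (Fsub sf B) (sm a)).

Lemma typ_subst G D M A : typ fa ra G D M A -> forall G' D' sf sl sm,
  subst_typed G D G' D' sf sl sm -> typ fa ra G' D' (subst sf sl sm M) (Fsub sf A).
Proof.
  induction 1; intros G' D' sf sl sm (Hf & Hl & Hm); simpl.
  - auto.
  - constructor; [now apply wf_Fsub|]. apply IHtyp. split; [|split]; auto.
    + intros [|n] B' Hn; simpl in *; [inversion Hn; subst; now constructor|].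
      rewrite <- (Fren_id (Fsub sf B')). eapply typ_ren; eauto using ctx_ren_S, ctx_ren_id.
    + intros a B' Ha. unfold up_lam_stk. rewrite <- (Fren_id (Fsub sf B')).
      eapply typ_stack_ren; eauto using ctx_ren_S, ctx_ren_id.
  - econstructor; [apply (IHtyp1 G' D' sf sl sm)|apply IHtyp2]; now split.
  - constructor.
  - constructor; [apply IHtyp1|apply IHtyp2]; now split.
  - econstructor. apply (IHtyp G' D' sf sl sm). now split.
  - econstructor. apply (IHtyp G' D' sf sl sm). now split.
  - eapply typ_plug; [apply IHtyp; now split|]. now apply Hm.
  - constructor; [now apply wf_Fsub|]. apply IHtyp. split; [|split]; auto.
    + intros n B' Hn. unfold up_mu_tm. rewrite <- (Fren_id (Fsub sf B')).
      eapply typ_ren; eauto using ctx_ren_S, ctx_ren_id.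
    + intros [|a] B' Ha; simpl in *.
      * inversion Ha; subst. now exists (Fsub sf B').
      * unfold up_mu_stk. rewrite <- (Fren_id (Fsub sf B')).
        eapply typ_stack_ren; eauto using ctx_ren_S, ctx_ren_id.
  - constructor. apply IHtyp. split; [|split].
    + intros [|n]; simpl; auto. now apply wf_fren.
    + intros n B' Hn. rewrite nth_error_map in Hn.
      destruct (nth_error G n) eqn:E; simpl in Hn; inversion Hn; subst.
      rewrite Fsub_shiftF. eapply typ_ren; eauto using ctx_ren_shiftF.
    + intros n B' Hn. rewrite nth_error_map in Hn.
      destruct (nth_error D n) eqn:E; simpl in Hn; inversion Hn; subst.
      rewrite Fsub_shiftF. eapply typ_stack_ren; eauto using ctx_ren_shiftF.
  - rewrite Fsub_inst0. econstructor; [now apply wf_fsub|]. now apply (IHtyp G' D' sf sl sm).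
Qed.

Lemma wf_typ G D M A : typ fa ra G D M A ->
  (forall n B, nth_error G n = Some B -> wf_form fa ra B) ->
  (forall n B, nth_error D n = Some B -> wf_form fa ra B) -> wf_form fa ra A.
Proof.
  induction 1; intros HG HD; simpl in *; eauto.
  - split; auto. apply IHtyp; auto. intros [|n] B' Hn; simpl in *; eauto. congruence.
  - now destruct (IHtyp1 HG HD).
  - now destruct (IHtyp HG HD).
  - now destruct (IHtyp HG HD).
  - apply IHtyp; intros n B Hn; rewrite nth_error_map in Hn;
      destruct (nth_error _ n) eqn:E; simpl in Hn; inversion Hn; subst; apply wf_Fren; eauto.
  - apply wf_inst0; [assumption|exact (IHtyp HG HD)].
Qed.

End Typing.

Section Equations.
Variables fa ra : nat -> nat.

Lemma eqt_plug_frames G D F : forall X Y A B,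
  eqt fa ra G D X Y A -> typ_frames fa ra G D A F B ->
  eqt fa ra G D (plug_frames F X) (plug_frames F Y) B.
Proof.
  induction F as [|f F IH]; intros X Y A B HXY HF; simpl in *; [now subst|].
  destruct f; simpl in HF.
  - destruct HF as (A1 & A2 & -> & HN & HF). eapply IH; [|eauto].
    eapply eq_app; eauto. now apply eq_refl.
  - destruct HF as (A1 & A2 & -> & HF). eapply IH; [|eauto]. eapply eq_pi1; eauto.
  - destruct HF as (A1 & A2 & -> & HF). eapply IH; [|eauto]. eapply eq_pi2; eauto.
  - destruct HF as (A1 & -> & Ht & HF). eapply IH; [|eauto]. eapply eq_inst; eauto.
Qed.

Lemma eqt_plug G D E X Y A :
  eqt fa ra G D X Y A -> typ_stack fa ra G D A E ->
  eqt fa ra G D (plug E X) (plug E Y) Bot.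
Proof.
  intros HXY (B & HF & He). destruct E as [F [b|]]; unfold plug; simpl in *.
  - eapply eq_named; eauto. eapply eqt_plug_frames; eauto.
  - subst. eapply eqt_plug_frames; eauto.
Qed.

Definition erase_stack k : nat -> stack :=
  fun b => if Nat.eqb b k then ([], None) else id_stack b.

Lemma eqt_erase G D M A : typ fa ra G D M A -> forall k, nth_error D k = Some Bot ->
  eqt fa ra G D M (subst FVar Var (erase_stack k) M) A.
Proof.
  induction 1; intros k Hk; simpl.
  - now apply eq_refl; constructor.
  - apply eq_lam; auto.
    replace (up_lam_tm Var) with Var by funext_cases.
    replace (up_lam_stk (erase_stack k)) with (erase_stack k); auto.
    apply functional_extensionality; intros b; unfold up_lam_stk, erase_stack.
    now destruct (b =? k).
  - eapply eq_app; eauto.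
  - apply eq_refl; constructor.
  - apply eq_pair; eauto.
  - eapply eq_pi1; eauto.
  - eapply eq_pi2; eauto.
  - unfold erase_stack at 1. destruct (Nat.eqb_spec a k).
    + subst. rewrite H in Hk. inversion Hk; subst. unfold plug; simpl.
      eapply eq_trans; [apply ax_bot; eauto|]. now apply IHtyp.
    + unfold plug; simpl. eapply eq_named; eauto.
  - apply eq_mu; auto.
    replace (up_mu_tm Var) with Var by funext_cases.
    replace (up_mu_stk (erase_stack k)) with (erase_stack (S k)); [now apply IHtyp|].
    apply functional_extensionality; intros [|b]; unfold up_mu_stk, erase_stack; [reflexivity|].
    simpl. now destruct (b =? k).
  - apply eq_flam. rewrite fup_id.
    replace (up_fo_tm Var) with Var by funext_cases.
    replace (up_fo_stk (erase_stack k)) with (erase_stack k).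
    + apply IHtyp. now rewrite nth_error_map, Hk.
    + apply functional_extensionality; intros b; unfold up_fo_stk, erase_stack.
      now destruct (b =? k).
  - rewrite fsub_id. apply eq_inst; auto.
Qed.

Definition mu_stack (E : stack) : nat -> stack := scons E id_stack.

Lemma eqt_mu_bot G D K : typ fa ra G (Bot :: D) K Bot ->
  eqt fa ra G D (Mu K) (subst FVar Var (mu_stack ([], None)) K) Bot.
Proof.
  intros HK.
  set (X := subst FVar Var (mu_stack ([], None)) K).
  assert (HX : typ fa ra G D X Bot).
  { rewrite <- (Fsub_id Bot). apply (typ_subst fa ra _ _ _ _ HK).
    split; [simpl; auto|split].
    - intros n B Hn. rewrite Fsub_id. now constructor.
    - intros [|a] B Ha; simpl in *; rewrite Fsub_id.
      + inversion Ha; subst. now exists Bot.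
      + now exists B. }
  assert (HS : tren_mu S X = subst FVar Var (erase_stack 0) K).
  { unfold X. rewrite tren_mu_ren, ren_subst. f_equal; funext_cases. }
  eapply eq_trans; [|apply ax_eta_mu; exact HX].
  apply eq_mu; [simpl; auto|].
  eapply eq_trans; [apply (eqt_erase _ _ _ _ HK 0); auto|].
  rewrite <- HS. apply eq_sym, ax_bot; [reflexivity|].
  rewrite tren_mu_ren. rewrite <- (Fren_id Bot).
  eapply typ_ren; eauto using ctx_ren_id, ctx_ren_S.
Qed.

Lemma subst_typed_frame_stack G D A A' f : typ_frames fa ra G D A [f] A' ->
  subst_typed fa ra G (A :: D) G (A' :: D) FVar Var (frame_stack 0 (ren_frame idn idn S f)).
Proof.
  intros Hf. split; [simpl; auto|split].
  - intros n B Hn. rewrite Fsub_id. now constructor.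
  - intros [|a] B Ha; simpl in Ha; rewrite Fsub_id.
    + inversion Ha; subst. exists A'. split; [|reflexivity].
      change (typ_frames fa ra G (A' :: D) B (map (ren_frame idn idn S) [f]) A').
      rewrite <- (Fren_id B), <- (Fren_id A').
      eapply typ_frames_ren; eauto using ctx_ren_id, ctx_ren_S.
    + now exists B.
Qed.

Lemma eqt_mu_frame G D A A' f K :
  typ_frames fa ra G D A [f] A' -> wf_form fa ra A -> typ fa ra G (A :: D) K Bot ->
  eqt fa ra G D (apply_frame f (Mu K))
    (Mu (subst FVar Var (frame_stack 0 (ren_frame idn idn S f)) K)) A'.
Proof.
  intros Hf Hw HK.
  assert (HM : typ fa ra G D (Mu K) A) by now constructor.
  destruct f; simpl in Hf |- *.
  - destruct Hf as (A1 & A2 & -> & HN & ->).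
    rewrite <- tren_mu_ren, <- ssub_app_subst. apply ax_mu_app. econstructor; eauto.
  - destruct Hf as (A1 & A2 & -> & ->).
    rewrite <- (ssub_proj_subst true). apply ax_mu_pi1. econstructor; eauto.
  - destruct Hf as (A1 & A2 & -> & ->).
    rewrite <- (ssub_proj_subst false). apply ax_mu_pi2. econstructor; eauto.
  - destruct Hf as (A1 & -> & Ht & <-).
    rewrite fren_id, <- ssub_inst_subst. apply ax_mu_inst. econstructor; eauto.
Qed.

(* Frame by frame, the [mu]-rules move the stack under the [mu]; then [rho], or [eta_mu]
   and [ax_bot] when the stack ends in [Bot], remove the [mu]. *)
Lemma eqt_plug_mu G D F : forall e A K,
  typ_stack fa ra G D A (F, e) -> wf_form fa ra A -> typ fa ra G (A :: D) K Bot ->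
  eqt fa ra G D (plug (F, e) (Mu K)) (subst FVar Var (mu_stack (F, e)) K) Bot.
Proof.
  induction F as [|f F IH]; intros e A K (B & HF & He) Hw HK; simpl in HF.
  - subst B. destruct e as [b|]; simpl in He; unfold plug; simpl.
    + replace (subst FVar Var (mu_stack ([], Some b)) K)
        with (tren_mu (scons b (fun n => n)) K).
      * apply ax_rho. econstructor; eauto. now constructor.
      * rewrite tren_mu_ren, ren_as_subst. f_equal; funext_cases.
    + subst. now apply eqt_mu_bot.
  - destruct (typ_frames_cons _ _ _ _ _ _ _ _ HF) as (A' & Hf & HF').
    rewrite plug_cons.
    assert (HK' := typ_subst _ _ _ _ _ _ HK _ _ _ _ _ (subst_typed_frame_stack _ _ _ _ _ Hf)).
    rewrite Fsub_id in HK'.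
    assert (Hcomp : subst FVar Var (mu_stack (F, e))
                      (subst FVar Var (frame_stack 0 (ren_frame idn idn S f)) K) =
                    subst FVar Var (mu_stack (f :: F, e)) K).
    { rewrite subst_subst, fcomp_FVar_r.
      f_equal; apply functional_extensionality; intros [|a]; try reflexivity.
      unfold subst_stack, mu_stack; simpl. do 3 f_equal.
      destruct f; simpl; auto.
      - rewrite subst_ren. rewrite <- (subst_id N) at 2. reflexivity.
      - now rewrite fsub_id, fren_id. }
    eapply eq_trans.
    + eapply eqt_plug; [apply (eqt_mu_frame _ _ _ _ _ _ Hf Hw HK)|]. now exists B.
    + rewrite <- Hcomp. apply (IH e A'); auto.
      * now exists B.
      * eapply wf_typ_frame; eauto.
Qed.

End Equations.

(** * Good terms and good stacks *)

Section Reducibility.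
Variables fa ra : nat -> nat.

Definition normalizes (G D : list formula) (P : term) : Prop :=
  exists N, cnfQ fa G D N Bot /\ eqt fa ra G D P N Bot.

Lemma normalizes_eqt G D P P' :
  eqt fa ra G D P P' Bot -> normalizes G D P' -> normalizes G D P.
Proof. intros HP (N & HN & HE). exists N. split; [exact HN|]. eapply eq_trans; eauto. Qed.

Definition good_term_with (good_stk : list formula -> list formula -> formula -> stack -> Prop)
  (G D : list formula) (A : formula) (M : term) : Prop :=
  typ fa ra G D M A /\
  forall xf xl xm G' D', ctx_ren xf xl G G' -> ctx_ren xf xm D D' ->
  forall E, good_stk G' D' (Fren xf A) E -> normalizes G' D' (plug E (ren xf xl xm M)).

(* [n] is fuel: the [All] case instantiates [A1] and the [Imp] case renames [A1], so the
   recursion is on [fsize] rather than structural. *)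
Fixpoint good_stack_fuel (n : nat) (G D : list formula) (A : formula) (E : stack) : Prop :=
  match n with
  | 0 => False
  | S n =>
    match A with
    | Bot => E = ([], None)
    | Atom X ts => exists b, E = ([], Some b) /\ nth_error D b = Some (Atom X ts)
    | Top => False
    | Imp A1 A2 =>
        match fst E with
        | FrApp N :: F => good_term_with (good_stack_fuel n) G D A1 N /\
                          good_stack_fuel n G D A2 (F, snd E)
        | _ => False
        end
    | And A1 A2 =>
        match fst E with
        | FrPi1 :: F => good_stack_fuel n G D A1 (F, snd E)
        | FrPi2 :: F => good_stack_fuel n G D A2 (F, snd E)
        | _ => False
        end
    | All A1 =>
        match fst E with
        | FrInst t :: F => wf_fterm fa t /\ good_stack_fuel n G D (inst0 t A1) (F, snd E)
        | _ => False
        end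
    end
  end.

Lemma good_term_with_ext g1 g2 G D A M :
  (forall G' D' xf E, g1 G' D' (Fren xf A) E <-> g2 G' D' (Fren xf A) E) ->
  (good_term_with g1 G D A M <-> good_term_with g2 G D A M).
Proof.
  intros H. unfold good_term_with.
  split; intros [Ht Hg]; split; auto; intros; eapply Hg; eauto; now apply H.
Qed.

Lemma good_stack_fuel_irrel n : forall m A G D E, fsize A <= n -> fsize A <= m ->
  (good_stack_fuel n G D A E <-> good_stack_fuel m G D A E).
Proof.
  induction n as [|n IH]; intros m A G D E Hn Hm; [pose proof (fsize_gt0 A); lia|].
  destruct m as [|m]; [pose proof (fsize_gt0 A); lia|].
  destruct A; simpl in *; try tauto; destruct E as [[|[] F] e]; simpl; try tauto.
  - rewrite (good_term_with_ext (good_stack_fuel n) (good_stack_fuel m)), (IH m); try lia.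
    + tauto.
    + intros; apply IH; rewrite fsize_Fren; lia.
  - apply IH; lia.
  - apply IH; lia.
  - rewrite (IH m); rewrite ?fsize_inst0; [tauto|lia|lia].
Qed.

Definition good_stack G D A E := good_stack_fuel (fsize A) G D A E.
Definition good_term G D A M := good_term_with (good_stack_fuel (fsize A)) G D A M.

Lemma good_term_iff G D A M : good_term G D A M <->
  typ fa ra G D M A /\
  forall xf xl xm G' D', ctx_ren xf xl G G' -> ctx_ren xf xm D D' ->
  forall E, good_stack G' D' (Fren xf A) E -> normalizes G' D' (plug E (ren xf xl xm M)).
Proof.
  unfold good_term, good_stack.
  transitivity (good_term_with (fun G' D' B E => good_stack_fuel (fsize B) G' D' B E) G D A M).
  - apply good_term_with_ext. intros. now rewrite fsize_Fren.
  - reflexivity.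
Qed.

Lemma good_stack_Bot G D E : good_stack G D Bot E <-> E = ([], None).
Proof. reflexivity. Qed.

Lemma good_stack_Atom G D X ts E : good_stack G D (Atom X ts) E <->
  exists b, E = ([], Some b) /\ nth_error D b = Some (Atom X ts).
Proof. reflexivity. Qed.

Lemma good_stack_Top G D E : ~ good_stack G D Top E.
Proof. easy. Qed.

Lemma good_stack_Imp G D A B E : good_stack G D (Imp A B) E <->
  exists N F, fst E = FrApp N :: F /\ good_term G D A N /\ good_stack G D B (F, snd E).
Proof.
  unfold good_stack, good_term. simpl. destruct E as [[|[] F] e]; simpl; split;
    try (intros (N' & F' & H1 & _); discriminate); try contradiction.
  - intros [H1 H2]. exists N, F. split; auto. split.
    + eapply good_term_with_ext; [|eauto].
      intros; apply good_stack_fuel_irrel; rewrite ?fsize_Fren; lia.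
    + eapply good_stack_fuel_irrel; [| |eauto]; lia.
  - intros (N' & F' & H1 & H2 & H3). inversion H1; subst. split.
    + eapply good_term_with_ext; [|eauto].
      intros; apply good_stack_fuel_irrel; rewrite ?fsize_Fren; lia.
    + eapply good_stack_fuel_irrel; [| |eauto]; lia.
Qed.

Lemma good_stack_And G D A B E : good_stack G D (And A B) E <->
  exists F, (fst E = FrPi1 :: F /\ good_stack G D A (F, snd E)) \/
            (fst E = FrPi2 :: F /\ good_stack G D B (F, snd E)).
Proof.
  unfold good_stack. simpl. destruct E as [[|[] F] e]; simpl; split;
    try (intros (F' & [[H1 _]|[H1 _]]); discriminate); try contradiction.
  - intros H. exists F; left; split; auto. eapply good_stack_fuel_irrel; [| |eauto]; lia.
  - intros (F' & [[H1 H2]|[H1 H2]]); inversion H1; subst.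
    eapply good_stack_fuel_irrel; [| |eauto]; lia.
  - intros H. exists F; right; split; auto. eapply good_stack_fuel_irrel; [| |eauto]; lia.
  - intros (F' & [[H1 H2]|[H1 H2]]); inversion H1; subst.
    eapply good_stack_fuel_irrel; [| |eauto]; lia.
Qed.

Lemma good_stack_All G D A E : good_stack G D (All A) E <->
  exists t F, fst E = FrInst t :: F /\ wf_fterm fa t /\ good_stack G D (inst0 t A) (F, snd E).
Proof.
  unfold good_stack. simpl. destruct E as [[|[] F] e]; simpl; split;
    try (intros (t' & F' & H1 & _); discriminate); try contradiction.
  - intros [H1 H2]. exists t, F. split; auto. split; auto.
    eapply good_stack_fuel_irrel; [| |eauto]; rewrite fsize_inst0; lia.
  - intros (t' & F' & H1 & H2 & H3). inversion H1; subst. split; auto.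
    eapply good_stack_fuel_irrel; [| |eauto]; rewrite fsize_inst0; lia.
Qed.

Lemma good_term_typ G D A M : good_term G D A M -> typ fa ra G D M A.
Proof. now intros [H _]. Qed.

Lemma good_term_plug G D A M E :
  good_term G D A M -> good_stack G D A E -> normalizes G D (plug E M).
Proof.
  intros HM HE. apply good_term_iff in HM. destruct HM as [_ HM].
  rewrite <- (ren_id M). apply HM; [apply ctx_ren_id|apply ctx_ren_id|]. now rewrite Fren_id.
Qed.

Lemma good_term_ren G D A M xf xl xm G' D' : good_term G D A M ->
  ctx_ren xf xl G G' -> ctx_ren xf xm D D' -> good_term G' D' (Fren xf A) (ren xf xl xm M).
Proof.
  rewrite !good_term_iff. intros [Ht Hg] HG HD. split; [eapply typ_ren; eauto|].
  intros yf yl ym G'' D'' HG' HD' E HE. rewrite ren_ren.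
  apply Hg; try (eapply ctx_ren_comp; eauto). now rewrite <- Fren_Fren.
Qed.

Lemma good_stack_typ_fuel n : forall G D A E,
  fsize A <= n -> good_stack G D A E -> typ_stack fa ra G D A E.
Proof.
  induction n as [|n IH]; intros G D A E Hn H; [pose proof (fsize_gt0 A); lia|].
  destruct A; simpl in Hn.
  - now apply good_stack_Top in H.
  - apply good_stack_Bot in H; subst. now exists Bot.
  - apply good_stack_Atom in H. destruct H as (b & -> & Hb). now exists (Atom n0 l).
  - apply good_stack_Imp in H. destruct H as (N & F & HE & HN & HF).
    destruct E as [F0 e]; simpl in *; subst.
    apply IH in HF; [|lia]. destruct HF as (B & HB & He). exists B; split; auto.
    exists A1, A2. split; auto. split; auto. now apply good_term_typ.
  - apply good_stack_And in H. destruct E as [F0 e]; simpl in *.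
    destruct H as (F & [[-> HF]|[-> HF]]); (apply IH in HF; [|lia]);
      destruct HF as (B & HB & He); exists B; split; auto; now exists A1, A2.
  - apply good_stack_All in H. destruct H as (t & F & HE & Ht & HF).
    destruct E as [F0 e]; simpl in *; subst.
    assert (Hs : fsize (inst0 t A) <= n) by (rewrite fsize_inst0; lia).
    destruct (IH _ _ _ _ Hs HF) as (B & HB & He).
    exists B; split; auto. now exists A.
Qed.

Lemma good_stack_typ G D A E : good_stack G D A E -> typ_stack fa ra G D A E.
Proof. now apply good_stack_typ_fuel with (n := fsize A). Qed.

Lemma good_stack_ren_fuel n : forall G D A E xf xl xm G' D',
  fsize A <= n -> good_stack G D A E -> ctx_ren xf xl G G' -> ctx_ren xf xm D D' ->
  good_stack G' D' (Fren xf A) (ren_stack xf xl xm E).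
Proof.
  induction n as [|n IH]; intros G D A E xf xl xm G' D' Hn H HG HD;
    [pose proof (fsize_gt0 A); lia|].
  destruct A; simpl in Hn.
  - now apply good_stack_Top in H.
  - apply good_stack_Bot in H; now subst.
  - apply good_stack_Atom in H. destruct H as (b & -> & Hb).
    apply good_stack_Atom. exists (xm b). split; auto. now apply HD in Hb.
  - apply good_stack_Imp in H. destruct H as (N & F & HE & HN & HF).
    destruct E as [F0 e]; simpl in *; subst.
    apply good_stack_Imp. exists (ren xf xl xm N), (map (ren_frame xf xl xm) F).
    split; auto. split; [eapply good_term_ren; eauto|]. eapply (IH G D _ (F, e)); eauto. lia.
  - apply good_stack_And in H. apply good_stack_And. destruct E as [F0 e]; simpl in *.
    destruct H as (F & [[-> HF]|[-> HF]]); exists (map (ren_frame xf xl xm) F);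
      [left|right]; split; auto; eapply (IH G D _ (F, e)); eauto; lia.
  - apply good_stack_All in H. destruct H as (t & F & HE & Ht & HF).
    destruct E as [F0 e]; simpl in *; subst.
    apply good_stack_All. exists (fren xf t), (map (ren_frame xf xl xm) F).
    split; auto. split; [now apply wf_fren|]. rewrite <- Fren_inst0.
    eapply (IH G D _ (F, e)); eauto. rewrite fsize_inst0; lia.
Qed.

Lemma good_stack_ren G D A E xf xl xm G' D' : good_stack G D A E ->
  ctx_ren xf xl G G' -> ctx_ren xf xm D D' ->
  good_stack G' D' (Fren xf A) (ren_stack xf xl xm E).
Proof. intros; eapply good_stack_ren_fuel; eauto. Qed.

Lemma good_app G D A B M N :
  good_term G D (Imp A B) M -> good_term G D A N -> good_term G D B (App M N).
Proof.
  intros HM HN. assert (HtN := good_term_typ _ _ _ _ HN).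
  apply good_term_iff in HM. destruct HM as [HtM HgM].
  apply good_term_iff. split; [econstructor; eauto|].
  intros xf xl xm G' D' HG HD [F e] HE.
  apply (HgM _ _ _ _ _ HG HD (FrApp (ren xf xl xm N) :: F, e)), good_stack_Imp.
  eexists _, _. split; [reflexivity|]. split; [eapply good_term_ren; eauto|exact HE].
Qed.

Lemma good_pi1 G D A B M : good_term G D (And A B) M -> good_term G D A (Pi1 M).
Proof.
  rewrite !good_term_iff. intros [HtM HgM]. split; [econstructor; eauto|].
  intros xf xl xm G' D' HG HD [F e] HE.
  apply (HgM _ _ _ _ _ HG HD (FrPi1 :: F, e)), good_stack_And. exists F; now left.
Qed.

Lemma good_pi2 G D A B M : good_term G D (And A B) M -> good_term G D B (Pi2 M).
Proof.
  rewrite !good_term_iff. intros [HtM HgM]. split; [econstructor; eauto|].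
  intros xf xl xm G' D' HG HD [F e] HE.
  apply (HgM _ _ _ _ _ HG HD (FrPi2 :: F, e)), good_stack_And. exists F; now right.
Qed.

Lemma good_inst G D A M t :
  good_term G D (All A) M -> wf_fterm fa t -> good_term G D (inst0 t A) (Inst M t).
Proof.
  rewrite !good_term_iff. intros [HtM HgM] Ht. split; [econstructor; eauto|].
  intros xf xl xm G' D' HG HD [F e] HE.
  apply (HgM _ _ _ _ _ HG HD (FrInst (fren xf t) :: F, e)), good_stack_All.
  eexists _, _. split; [reflexivity|]. split; [now apply wf_fren|].
  now rewrite <- Fren_inst0.
Qed.

End Reducibility.

(** * The fundamental lemma *)

Section Fundamental.
Variables fa ra : nat -> nat.

Lemma good_pair G D A B M N :
  good_term fa ra G D A M -> good_term fa ra G D B N -> good_term fa ra G D (And A B) (Pair M N).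
Proof.
  intros HM HN. assert (HtM := good_term_typ _ _ _ _ _ _ HM).
  assert (HtN := good_term_typ _ _ _ _ _ _ HN).
  apply good_term_iff. split; [now constructor|].
  intros xf xl xm G' D' HG HD E HE. simpl in HE. apply good_stack_And in HE.
  destruct E as [E1 e]. destruct HE as (F & [[HE HF]|[HE HF]]); simpl in HE, HF; subst E1.
  - rewrite plug_cons. apply normalizes_eqt with (plug (F, e) (ren xf xl xm M)).
    + apply eqt_plug with (Fren xf A); [|now apply good_stack_typ].
      apply ax_pi1, ty_pi1 with (Fren xf B).
      change (typ fa ra G' D' (ren xf xl xm (Pair M N)) (Fren xf (And A B))).
      eapply typ_ren; eauto. now constructor.
    + eapply good_term_plug; [eapply good_term_ren|]; eauto.
  - rewrite plug_cons. apply normalizes_eqt with (plug (F, e) (ren xf xl xm N)).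
    + apply eqt_plug with (Fren xf B); [|now apply good_stack_typ].
      apply ax_pi2, ty_pi2 with (Fren xf A).
      change (typ fa ra G' D' (ren xf xl xm (Pair M N)) (Fren xf (And A B))).
      eapply typ_ren; eauto. now constructor.
    + eapply good_term_plug; [eapply good_term_ren|]; eauto.
Qed.

Lemma good_command G D A X E :
  good_term fa ra G D A X -> good_stack fa ra G D A E -> good_term fa ra G D Bot (plug E X).
Proof.
  intros HX HE. apply good_term_iff. split.
  - apply typ_plug with A; [now apply good_term_typ|now apply good_stack_typ].
  - intros xf xl xm G' D' HG HD E' HE'. simpl in HE'. apply good_stack_Bot in HE'. subst E'.
    change (normalizes fa ra G' D' (ren xf xl xm (plug E X))). rewrite ren_plug.
    eapply good_term_plug; [eapply good_term_ren|eapply good_stack_ren]; eauto.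
Qed.

Definition good_subst G D G' D' sf sl sm :=
  (forall n, wf_fterm fa (sf n)) /\
  (forall n B, nth_error G n = Some B -> good_term fa ra G' D' (Fsub sf B) (sl n)) /\
  (forall a B, nth_error D a = Some B -> good_stack fa ra G' D' (Fsub sf B) (sm a)).

Lemma good_subst_typed G D G' D' sf sl sm :
  good_subst G D G' D' sf sl sm -> subst_typed fa ra G D G' D' sf sl sm.
Proof.
  intros (H1 & H2 & H3). split; [|split]; auto.
  - intros; eapply good_term_typ; eauto.
  - intros; eapply good_stack_typ; eauto.
Qed.

Lemma good_subst_ren G D G' D' sf sl sm xf xl xm G'' D'' :
  good_subst G D G' D' sf sl sm -> ctx_ren xf xl G' G'' -> ctx_ren xf xm D' D'' ->
  good_subst G D G'' D'' (fcomp sf (fun n => FVar (xf n))) (fun n => ren xf xl xm (sl n))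
    (fun a => ren_stack xf xl xm (sm a)).
Proof.
  intros (H1 & H2 & H3) HG HD. split; [|split].
  - intros n; unfold fcomp. rewrite <- fren_fsub. now apply wf_fren.
  - intros n B Hn. rewrite <- Fren_Fsub_comp. eapply good_term_ren; eauto.
  - intros a B Ha. rewrite <- Fren_Fsub_comp. eapply good_stack_ren; eauto.
Qed.

Lemma good_subst_cons_tm G D G' D' sf sl sm A N :
  good_subst G D G' D' sf sl sm -> good_term fa ra G' D' (Fsub sf A) N ->
  good_subst (A :: G) D G' D' sf (scons N sl) sm.
Proof.
  intros (H1 & H2 & H3) HN. split; [|split]; auto.
  intros [|n] B Hn; simpl in Hn; [inversion Hn; subst; exact HN|exact (H2 n B Hn)].
Qed.

Lemma good_subst_cons_stk G D G' D' sf sl sm A E :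
  good_subst G D G' D' sf sl sm -> good_stack fa ra G' D' (Fsub sf A) E ->
  good_subst G (A :: D) G' D' sf sl (scons E sm).
Proof.
  intros (H1 & H2 & H3) HE. split; [|split]; auto.
  intros [|a] B Ha; simpl in Ha; [inversion Ha; subst; exact HE|exact (H3 a B Ha)].
Qed.

Lemma Fsub_scons_shiftF t sf B : Fsub (scons t sf) (shiftF B) = Fsub sf B.
Proof. unfold shiftF. now rewrite Fren_Fsub, Fsub_Fsub. Qed.

Lemma good_subst_cons_fo G D G' D' sf sl sm t :
  good_subst G D G' D' sf sl sm -> wf_fterm fa t ->
  good_subst (map shiftF G) (map shiftF D) G' D' (scons t sf) sl sm.
Proof.
  intros (H1 & H2 & H3) Ht. split; [|split].
  - intros [|n]; [exact Ht|exact (H1 n)].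
  - intros n B Hn. rewrite nth_error_map in Hn.
    destruct (nth_error G n) eqn:En; inversion Hn; subst.
    rewrite Fsub_scons_shiftF. auto.
  - intros n B Hn. rewrite nth_error_map in Hn.
    destruct (nth_error D n) eqn:En; inversion Hn; subst.
    rewrite Fsub_scons_shiftF. auto.
Qed.

Lemma good_star G D : good_term fa ra G D Top Star.
Proof.
  apply good_term_iff. split; [constructor|].
  intros xf xl xm G' D' HG HD E HE. now apply good_stack_Top in HE.
Qed.

Lemma good_subst_lam G D A B M G' D' sf sl sm :
  typ fa ra G D (Lam M) (Imp A B) ->
  (forall G'' D'' tf tl tm, good_subst (A :: G) D G'' D'' tf tl tm ->
     good_term fa ra G'' D'' (Fsub tf B) (subst tf tl tm M)) ->
  good_subst G D G' D' sf sl sm ->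
  good_term fa ra G' D' (Fsub sf (Imp A B)) (subst sf sl sm (Lam M)).
Proof.
  intros HtM IH Hs.
  assert (Ht := typ_subst _ _ _ _ _ _ HtM _ _ _ _ _ (good_subst_typed _ _ _ _ _ _ _ Hs)).
  apply good_term_iff. split; [exact Ht|].
  intros xf xl xm G'' D'' HG HD E HE. simpl in HE. apply good_stack_Imp in HE.
  destruct HE as (N & F & HE & HN & HF). destruct E as [E1 e]; simpl in HE, HF; subst E1.
  set (tf := fcomp sf (fun n => FVar (xf n))).
  set (tl := scons N (fun n => ren xf xl xm (sl n))).
  set (tm := fun a => ren_stack xf xl xm (sm a)).
  assert (Hbeta : tsub_lam (scons N Var)
                    (ren xf (upren xl) xm (subst sf (up_lam_tm sl) (up_lam_stk sm) M)) =
                  subst tf tl tm M).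
  { rewrite tsub_lam_subst, ren_subst, subst_subst, fcomp_FVar_r. f_equal.
    - apply functional_extensionality; intros [|n]; [reflexivity|].
      unfold up_lam_tm; simpl. now rewrite ren_ren, subst_ren, ren_as_subst.
    - apply functional_extensionality; intros a. unfold up_lam_stk, tm.
      now rewrite ren_stack_ren_stack, subst_stack_ren_stack, ren_stack_as_subst. }
  rewrite plug_cons. apply normalizes_eqt with (plug (F, e) (subst tf tl tm M)).
  - apply eqt_plug with (Fren xf (Fsub sf B)); [|now apply good_stack_typ].
    simpl. rewrite <- Hbeta.
    apply ax_beta, ty_app with (Fren xf (Fsub sf A)); [|now apply good_term_typ].
    change (typ fa ra G'' D'' (ren xf xl xm (subst sf sl sm (Lam M)))
              (Fren xf (Fsub sf (Imp A B)))).
    eapply typ_ren; eauto.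
  - apply good_term_plug with (Fsub tf B); [|unfold tf; now rewrite <- Fren_Fsub_comp].
    apply IH, good_subst_cons_tm; [eapply good_subst_ren; eauto|].
    unfold tf. now rewrite <- Fren_Fsub_comp.
Qed.

Lemma good_subst_mu G D A K G' D' sf sl sm :
  typ fa ra G D (Mu K) A ->
  (forall G'' D'' tf tl tm, good_subst G (A :: D) G'' D'' tf tl tm ->
     good_term fa ra G'' D'' Bot (subst tf tl tm K)) ->
  good_subst G D G' D' sf sl sm ->
  good_term fa ra G' D' (Fsub sf A) (subst sf sl sm (Mu K)).
Proof.
  intros HtK IH Hs.
  assert (Ht := typ_subst _ _ _ _ _ _ HtK _ _ _ _ _ (good_subst_typed _ _ _ _ _ _ _ Hs)).
  apply good_term_iff. split; [exact Ht|].
  intros xf xl xm G'' D'' HG HD [F e] HE.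
  set (tf := fcomp sf (fun n => FVar (xf n))).
  set (tl := fun n => ren xf xl xm (sl n)).
  set (tm := scons (F, e) (fun a => ren_stack xf xl xm (sm a))).
  assert (Hmu : subst FVar Var (mu_stack (F, e))
                  (ren xf xl (upren xm) (subst sf (up_mu_tm sl) (up_mu_stk sm) K)) =
                subst tf tl tm K).
  { rewrite ren_subst, subst_subst, fcomp_FVar_r. f_equal.
    - apply functional_extensionality; intros n. unfold up_mu_tm, tl.
      now rewrite ren_ren, subst_ren, ren_as_subst.
    - apply functional_extensionality; intros [|a]; [reflexivity|]. unfold up_mu_stk, tm; simpl.
      now rewrite ren_stack_ren_stack, subst_stack_ren_stack, ren_stack_as_subst. }
  apply normalizes_eqt with (subst tf tl tm K).
  - rewrite <- Hmu. simpl ren.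
    inversion HtK; subst. inversion Ht; subst.
    apply eqt_plug_mu with (Fren xf (Fsub sf A)).
    + now apply good_stack_typ.
    + apply wf_Fren, wf_Fsub; [apply Hs|assumption].
    + change Bot with (Fren xf Bot). eapply typ_ren; eauto. now apply ctx_ren_up.
  - apply (good_term_plug _ _ _ _ Bot _ ([], None)); [|reflexivity].
    apply IH, good_subst_cons_stk; [eapply good_subst_ren; eauto|].
    unfold tf. now rewrite <- Fren_Fsub_comp.
Qed.

Lemma good_subst_flam G D A M G' D' sf sl sm :
  typ fa ra G D (FLam M) (All A) ->
  (forall G'' D'' tf tl tm, good_subst (map shiftF G) (map shiftF D) G'' D'' tf tl tm ->
     good_term fa ra G'' D'' (Fsub tf A) (subst tf tl tm M)) ->
  good_subst G D G' D' sf sl sm ->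
  good_term fa ra G' D' (Fsub sf (All A)) (subst sf sl sm (FLam M)).
Proof.
  intros HtM IH Hs.
  assert (Ht := typ_subst _ _ _ _ _ _ HtM _ _ _ _ _ (good_subst_typed _ _ _ _ _ _ _ Hs)).
  apply good_term_iff. split; [exact Ht|].
  intros xf xl xm G'' D'' HG HD E HE. simpl in HE. apply good_stack_All in HE.
  destruct HE as (t & F & HE & Hwt & HF). destruct E as [E1 e]; simpl in HE, HF; subst E1.
  set (tf := scons t (fcomp sf (fun n => FVar (xf n)))).
  set (tl := fun n => ren xf xl xm (sl n)).
  set (tm := fun a => ren_stack xf xl xm (sm a)).
  assert (Htf : fcomp (fcomp (fup sf) (fun n => FVar (upren xf n))) (scons t FVar) = tf).
  { apply functional_extensionality; intros [|n]; [reflexivity|].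
    unfold tf, fcomp; simpl. now rewrite fren_fsub, !fsub_fsub. }
  assert (Htheta : tsub_fo (scons t FVar)
                     (ren (upren xf) xl xm (subst (fup sf) (up_fo_tm sl) (up_fo_stk sm) M)) =
                   subst tf tl tm M).
  { rewrite tsub_fo_subst, ren_subst, subst_subst. f_equal.
    - exact Htf.
    - apply functional_extensionality; intros n. unfold up_fo_tm, tl.
      now rewrite ren_ren, subst_ren, ren_as_subst.
    - apply functional_extensionality; intros a. unfold up_fo_stk, tm.
      now rewrite ren_stack_ren_stack, subst_stack_ren_stack, ren_stack_as_subst. }
  assert (HA : Fsub tf A = inst0 t (Fren (upren xf) (Fsub (fup sf) A))).
  { unfold inst0. rewrite Fren_Fsub, !Fsub_Fsub, <- Htf. f_equal.
    apply functional_extensionality; intros n; unfold fcomp. now rewrite fsub_fsub. }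
  rewrite plug_cons. apply normalizes_eqt with (plug (F, e) (subst tf tl tm M)).
  - apply eqt_plug with (Fsub tf A); [|rewrite HA; now apply good_stack_typ].
    simpl. rewrite <- Htheta, HA. apply ax_theta. econstructor; [assumption|].
    change (typ fa ra G'' D'' (ren xf xl xm (subst sf sl sm (FLam M)))
              (Fren xf (Fsub sf (All A)))).
    eapply typ_ren; eauto.
  - apply good_term_plug with (Fsub tf A); [|now rewrite HA].
    apply IH. unfold tf. apply good_subst_cons_fo; [eapply good_subst_ren; eauto|assumption].
Qed.

Lemma good_term_subst G D M A : typ fa ra G D M A -> forall G' D' sf sl sm,
  good_subst G D G' D' sf sl sm -> good_term fa ra G' D' (Fsub sf A) (subst sf sl sm M).
Proof.
  induction 1; intros G' D' sf sl sm Hs.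
  - now apply Hs.
  - apply (good_subst_lam G D); auto. now constructor.
  - eapply good_app; eauto.
  - apply good_star.
  - apply good_pair; eauto.
  - eapply good_pi1; eauto.
  - eapply good_pi2; eauto.
  - apply good_command with (Fsub sf A); [now apply IHtyp|now apply Hs].
  - apply (good_subst_mu G D); auto. now constructor.
  - apply (good_subst_flam G D); auto. now constructor.
  - simpl. rewrite Fsub_inst0. apply good_inst; [now apply IHtyp|]. apply wf_fsub; auto. apply Hs.
Qed.

End Fundamental.

(** * Reification and reflection at canonical formulas *)

Lemma can_Fsub Q : forall s, (canA Q -> canA (Fsub s Q)) /\ (canQ Q -> canQ (Fsub s Q)).
Proof.
  induction Q; intros s; split; intros H; simpl.
  - inversion H; subst; simpl in *; contradiction.
  - inversion H; subst. inversion H0; subst; simpl in *; contradiction.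
  - constructor; simpl; auto.
  - constructor; constructor; simpl; auto.
  - constructor; simpl; auto.
  - constructor; constructor; simpl; auto.
  - inversion H; subst; simpl in *; [contradiction|].
    constructor; [apply IHQ1|apply IHQ2]; auto.
  - inversion H; subst. inversion H0; subst; simpl in *; [contradiction|].
    constructor. constructor; [apply IHQ1|apply IHQ2]; auto.
  - inversion H; subst; simpl in *; contradiction.
  - inversion H; subst. inversion H0; subst; simpl in *; contradiction.
  - inversion H; subst; simpl in *; contradiction.
  - inversion H; subst.
    + inversion H0; subst; simpl in *; contradiction.
    + apply canQ_all. now apply IHQ.
Qed.

Lemma canQ_Fsub s Q : canQ Q -> canQ (Fsub s Q).
Proof. apply can_Fsub. Qed.

Lemma canQ_Fren xi Q : canQ Q -> canQ (Fren xi Q).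
Proof. rewrite Fren_Fsub. apply canQ_Fsub. Qed.

Lemma canQ_inv Q : canQ Q ->
  match Q with
  | Bot | Atom _ _ => True
  | Imp Q1 A1 => canQ Q1 /\ canQ A1
  | All Q1 => canQ Q1
  | _ => False
  end.
Proof.
  intros [Q' [R HR|Q1 A1 HQ1 HA1]|Q' HQ].
  - now destruct R.
  - split; [|constructor]; auto.
  - exact HQ.
Qed.

Section ReifyReflect.
Variables fa ra : nat -> nat.

Definition reifies (Q : formula) : Prop := forall G D M,
  good_term fa ra G D Q M -> exists N, cnfQ fa G D N Q /\ eqt fa ra G D M N Q.

(* [h] is a head [Var b] applied to part of a spine, the rest of which has type [Q];
   [h0] is any term equal to it. *)
Definition reflects (Q : formula) : Prop := forall G D E,
  good_stack fa ra G D Q E -> forall h0 h b T0, nth_error G b = Some T0 ->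
  (forall P S, spine fa G D h Q P S -> spine fa G D (Var b) T0 P S) ->
  eqt fa ra G D h0 h Q -> normalizes fa ra G D (plug E h0).

Lemma good_var G D b Q : nth_error G b = Some Q ->
  (forall xf, reflects (Fren xf Q)) -> good_term fa ra G D Q (Var b).
Proof.
  intros Hb HR. apply good_term_iff. split; [now constructor|].
  intros xf xl xm G' D' HG HD E HE. simpl.
  eapply HR; eauto. apply eq_refl. constructor. now apply HG.
Qed.

Lemma reify_Bot : reifies Bot.
Proof.
  intros G D M HM. destruct (good_term_plug _ _ _ _ _ _ ([], None) HM) as (N & HN & HE);
    [reflexivity|]. now exists N.
Qed.

Lemma reflect_Bot : reflects Bot.
Proof.
  intros G D E HE h0 h b T0 Hb Hsp Heq. apply good_stack_Bot in HE. subst E.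
  exists h. split; [|exact Heq].
  eapply cnf_bot; eauto; [apply Hsp; now constructor|now left].
Qed.

Lemma reify_Atom X ts : wf_form fa ra (Atom X ts) -> reifies (Atom X ts).
Proof.
  intros Hw G D M HM. assert (Ht := good_term_typ _ _ _ _ _ _ HM).
  apply good_term_iff in HM. destruct HM as [_ Hg].
  destruct (Hg idn idn S G (Atom X ts :: D) (ctx_ren_id _) (ctx_ren_S _ _) ([], Some 0))
    as (P & HP & HE); [rewrite Fren_id; apply good_stack_Atom; now exists 0|].
  inversion HP; subst. exists (Mu P). split; [eapply cnf_atom; eauto|].
  eapply eq_trans; [apply eq_sym, ax_eta_mu, Ht|].
  apply eq_mu; [exact Hw|]. now rewrite tren_mu_ren.
Qed.

Lemma reflect_Atom X ts : reflects (Atom X ts).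
Proof.
  intros G D E HE h0 h b T0 Hb Hsp Heq. apply good_stack_Atom in HE.
  destruct HE as (beta & -> & Hbeta). exists (Named beta h). split.
  - eapply cnf_bot; eauto; [apply Hsp; now constructor|].
    right. split; [discriminate|]. now exists beta.
  - eapply eq_named; eauto.
Qed.

(* [eta]-expand, and use that the fresh variable is good by reflection. *)
Lemma reify_Imp Q1 Q2 : wf_form fa ra Q1 ->
  (forall xf, reflects (Fren xf Q1)) -> reifies Q2 -> reifies (Imp Q1 Q2).
Proof.
  intros Hw HR1 HI2 G D M HM.
  assert (HM' := good_term_ren _ _ _ _ _ _ idn S idn (Q1 :: G) D HM (ctx_ren_S _ _) (ctx_ren_id _)).
  rewrite Fren_id in HM'.
  assert (Happ := good_app _ _ _ _ _ _ _ _ HM' (good_var (Q1 :: G) D 0 Q1 (Logic.eq_refl _) HR1)).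
  destruct (HI2 _ _ _ Happ) as (N & HN & HE).
  exists (Lam N). split; [now constructor|].
  eapply eq_trans; [apply eq_sym, ax_eta; now apply good_term_typ|].
  apply eq_lam; [exact Hw|]. now rewrite tren_lam_ren.
Qed.

Lemma reflect_Imp Q1 Q2 : reifies Q1 -> reflects Q2 -> reflects (Imp Q1 Q2).
Proof.
  intros HI1 HR2 G D E HE h0 h b T0 Hb Hsp Heq. simpl in HE. apply good_stack_Imp in HE.
  destruct HE as (N & F & HE & HN & HF). destruct E as [E1 e]; simpl in HE, HF; subst E1.
  destruct (HI1 _ _ _ HN) as (N' & HN' & HNE).
  rewrite plug_cons. eapply HR2; eauto.
  - intros P S Hs. apply Hsp. econstructor; eauto.
  - eapply eq_app; eauto.
Qed.

Lemma reify_All Q : reifies Q -> reifies (All Q).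
Proof.
  intros HI G D M HM.
  assert (HM' := good_term_ren _ _ _ _ _ _ S idn idn (map shiftF G) (map shiftF D) HM
                   (ctx_ren_shiftF _) (ctx_ren_shiftF _)).
  assert (Hi := good_inst _ _ _ _ _ _ (FVar 0) HM' I).
  rewrite inst0_var0_Fren_upren_S in Hi.
  destruct (HI _ _ _ Hi) as (N & HN & HE).
  exists (FLam N). split; [now constructor|].
  eapply eq_trans; [apply eq_sym, ax_eta_all; now apply good_term_typ|].
  apply eq_flam. now rewrite tren_fo_ren.
Qed.

Lemma reflect_All Q : (forall t, wf_fterm fa t -> reflects (inst0 t Q)) -> reflects (All Q).
Proof.
  intros HR G D E HE h0 h b T0 Hb Hsp Heq. apply good_stack_All in HE.
  destruct HE as (t & F & HE & Ht & HF). destruct E as [E1 e]; simpl in HE, HF; subst E1.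
  rewrite plug_cons. eapply HR; eauto.
  - intros P S Hs. apply Hsp. econstructor; eauto.
  - eapply eq_inst; eauto.
Qed.

Lemma reify_reflect_fuel n : forall Q, fsize Q <= n -> canQ Q -> wf_form fa ra Q ->
  reifies Q /\ reflects Q.
Proof.
  induction n as [|n IH]; intros Q Hn Hc Hw; [pose proof (fsize_gt0 Q); lia|].
  pose proof (canQ_inv _ Hc) as Hi.
  destruct Q; try contradiction; simpl in Hn.
  - split; [apply reify_Bot|apply reflect_Bot].
  - split; [now apply reify_Atom|apply reflect_Atom].
  - destruct Hi as [Hc1 Hc2]. destruct Hw as [Hw1 Hw2].
    assert (IH1 : forall xf, reifies (Fren xf Q1) /\ reflects (Fren xf Q1)).
    { intros xf. apply IH; [rewrite fsize_Fren; lia|now apply canQ_Fren|now apply wf_Fren]. }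
    assert (IH2 : reifies Q2 /\ reflects Q2) by (apply IH; auto; lia).
    split.
    + apply reify_Imp; [exact Hw1|apply IH1|apply IH2].
    + apply reflect_Imp; [|apply IH2]. rewrite <- (Fren_id Q1). apply IH1.
  - split.
    + apply reify_All. apply IH; auto. lia.
    + apply reflect_All. intros t Ht. apply IH.
      * rewrite fsize_inst0; lia.
      * now apply canQ_Fsub.
      * now apply wf_inst0.
Qed.

Lemma reify Q : canQ Q -> wf_form fa ra Q -> reifies Q.
Proof. intros Hc Hw. now apply (reify_reflect_fuel (fsize Q)). Qed.

Lemma reify_canB B : canB B -> wf_form fa ra B -> forall G D M, good_term fa ra G D B M ->
  exists N, cnfB fa G D N B /\ eqt fa ra G D M N B.
Proof.
  induction 1 as [Q HQ|B Q HB IHB HQ]; intros Hw G D M HM.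
  - destruct (reify Q HQ Hw G D M HM) as (N & HN & HE). exists N. split; [now constructor|exact HE].
  - destruct Hw as [Hw1 Hw2].
    destruct (IHB Hw1 G D (Pi1 M) (good_pi1 _ _ _ _ _ _ _ HM)) as (N1 & HN1 & HE1).
    destruct (reify Q HQ Hw2 G D (Pi2 M) (good_pi2 _ _ _ _ _ _ _ HM)) as (N2 & HN2 & HE2).
    exists (Pair N1 N2). split; [now constructor|].
    eapply eq_trans; [apply eq_sym, ax_surj; now apply good_term_typ|].
    now apply eq_pair.
Qed.

End ReifyReflect.

Lemma good_subst_id_nil fa ra : good_subst fa ra nil nil nil nil FVar Var id_stack.
Proof. split; [|split]; [intros; exact I| |]; intros [|n] B Hn; discriminate. Qed.

Theorem mainTheorem4 (fa ra : nat -> nat) (C : formula) (M : term) :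
  canC C ->
  typ fa ra nil nil M C ->
  exists N : term, cnfC fa nil nil N C /\ eqt fa ra nil nil M N C.
Proof.
  intros Hc Ht.
  assert (Hw : wf_form fa ra C) by (eapply wf_typ; eauto; intros [|n] B Hn; discriminate).
  assert (HG : good_term fa ra nil nil C M).
  { rewrite <- (Fsub_id C), <- (subst_id M).
    exact (good_term_subst _ _ _ _ _ _ Ht _ _ _ _ _ (good_subst_id_nil fa ra)). }
  destruct Hc as [Hb | ->].
  - destruct (reify_canB fa ra C Hb Hw nil nil M HG) as (N & HN & HE).
    exists N. split; [now right|exact HE].
  - exists Star. split; [now left|]. now apply eq_sym, ax_top.
Qed.
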